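(* In the setting and construction described in the context, let $n\in\mathbb{N}$ and let $x\in c_{00}$ with $\operatorname{supp}x\subseteq M_n$ and $\|x\|_{\mathcal{S}_{\eta_n}}\le 4^{-n}(|K_{4^{-n},p_n,\eta_n}|+1)^{-1}$. If $0\le m<n$ and $\mathcal{T}$ is a $(p_m,q_m)$-restricted $(\mathcal{F}_k)$-admissible tree, then $\mathcal{T}x\le 4^{-n}+\frac{\theta_{p_n}}{\varepsilon}\|x\|_{\ell^1}$ if $m=0$, and $\mathcal{T}x\le 4^{-n}+\theta_{p_n}\|x\|_{\ell^1}(4^{-n}+4^{-m})$ if $0<m<n$.
   Context: Standing setting: $(\theta_n)$ nonincreasing null in $(0,1)$; $(\mathcal{F}_n)$ regular families (hereditary, spreading, compact in $[\mathbb{N}]^{<\infty}\subseteq 2^{\mathbb{N}}$); $X=T[(\theta_n,\mathcal{F}_n)]$ is the completion of $c_{00}$ under $\|x\|=\max\{\|x\|_{c_0},\sup_n\sup\theta_n\sum_{i}\|E_ix\|\}$, inner sup over $\mathcal{F}_n$-admissible $(E_i)$ (sets $E_1<\dots<E_k$, i.e. $\max E_i<\min E_{i+1}$, with $\{\min E_i\}\in\mathcal{F}_n$); $Ex$ = restriction of $x$ to $E$. $\alpha_n=\iota(\mathcal{F}_n)>1$ (Cantor–Bendixson index), $\alpha=\sup\alpha_n\ne\alpha_n$ for all $n$, $\alpha=\omega^{\omega^\xi}$, $0<\xi<\omega_1$. Schreier families: $\mathcal{S}_0$ = singletons and $\emptyset$, $\mathcal{S}_1=\{F:|F|\le\min F\}$,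 $\mathcal{S}_{\beta+1}=\mathcal{S}_1[\mathcal{S}_\beta]$, and for limit $\beta$, $\mathcal{S}_\beta=\{F: F\in\mathcal{S}_{\beta_k}\text{ for some }k\le\min F\}$ for a fixed sequence $\beta_k\uparrow\beta$. $\mathcal{M}[\mathcal{N}]$ = unions of $\mathcal{M}$-admissible sequences of members of $\mathcal{N}$; $[\mathcal{M}_1,\dots,\mathcal{M}_{i+1}]=[\mathcal{M}_1,\dots,\mathcal{M}_i][\mathcal{M}_{i+1}]$, the empty list gives $\mathcal{S}_0$. $\|y\|_{\mathcal{F}}=\sup_{F\in\mathcal{F}}\sum_{k\in F}|y_k|$. $\ell(\beta)$ = leading exponent in the Cantor normal form of $\beta\ge1$. $\gamma(\varepsilon,m)=\max\{\ell(\alpha_{n_s}\cdots\alpha_{n_1}):\varepsilon\theta_{n_1}\cdots\theta_{n_s}>\theta_m\}$ ($\max\emptyset=0$). Condition $(\dagger)$: there exists $\varepsilon>0$ such that for every $\beta<\omega^\xi$ some $m$ has $\gamma(\varepsilon,m)+2+\beta<\ell(\alpha_m)$; assume $(\dagger)$ holds and fix such $\varepsilon\in(0,1)$. $\mathcal{N}_r=\{(0,n_1,\dots,n_s):s\ge0,\ \varepsilon\theta_{n_1}\cdots\theta_{n_s}>\theta_r\}$; $K_{\delta,p,\eta}=\{(0,n_1,\dots,n_s):s\ge0,\ \theta_{n_1}\cdots\theta_{n_s}>\delta\theta_p,\ \ell(\alpha_{n_s}\cdots\alpha_{n_1})<\eta\}$ (finite). Trees: finite collections of finite sets arranged in levels,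 each level ordered $E_1<\dots<E_k$, each node of level $m+1$ inside a node of level $m$ (its immediate predecessor); $(\mathcal{F}_n)$-admissible: one root, and the immediate successors of each node (if any) form an $\mathcal{F}_n$-admissible collection for some specified $n$; history $h(\text{root})=(0)$, successor history $(h(E),n)$; tag $t(E)=\theta_{n_1}\cdots\theta_{n_m}$ for $h(E)=(0,n_1,\dots,n_m)$; $\mathcal{T}x=\sum_{E\text{ leaf}}t(E)\|Ex\|_{c_0}$. For $p<q$, a tree is $(p,q)$-restricted if each leaf lies in a node $G$ with $h(G)\in\mathcal{N}_q\setminus\mathcal{N}_p$; a ''$(p_0,q_0)$-restricted'' tree means any admissible tree (no restriction). Construction: $(\beta_n)$ is the sequence increasing to $\omega^\xi$ defining $\mathcal{S}_{\omega^\xi}$; $M_0\subseteq\mathbb{N}$ infinite. Choose $p_1$ with $\theta_{p_1}\le\varepsilon^2/4$ and $\gamma(\varepsilon,p_1)+2+\beta_1<\ell(\alpha_{p_1})$, $\eta_1=\gamma(\varepsilon,p_1)+1$, $q_1$ with $\theta_{q_1}\le\varepsilon\theta_{p_1}/4$, and infinite $M_1\subseteq M_0$ with $\mathcal{S}_{\beta_1}[\mathcal{S}_{\eta_1+1}]\cap[M_1]^{<\infty}\subseteq\mathcal{F}_{p_1}$ and $[\mathcal{F}_{n_1},\dots,\mathcal{F}_{n_s}]\cap[M_1]^{<\infty}\subseteq\mathcal{S}_{\eta_1}$ for all $(0,n_1,\dots,n_s)\in K_{4^{-1},p_1,\eta_1}$. For $n\ge2$: $p_n>q_{n-1}$ with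 $\theta_{p_n}\le\varepsilon^2/4^n$ and $\gamma(\varepsilon,p_n)+2+\gamma(\varepsilon,q_{n-1})+2+\eta_{n-1}+1+\dots+\eta_1+1+\beta_n<\ell(\alpha_{p_n})$; $\eta_n=\gamma(\varepsilon,p_n)+\gamma(\varepsilon,q_{n-1})+1$; $q_n>p_n$ with $\theta_{q_n}\le\varepsilon\theta_{p_n}/4^n$; infinite $M_n\subseteq M_{n-1}$ with $\mathcal{S}_{\beta_n}[\mathcal{S}_{\eta_1+1},\dots,\mathcal{S}_{\eta_n+1}]\cap[M_n]^{<\infty}\subseteq\mathcal{F}_{p_n}$ and $[\mathcal{F}_{n_1},\dots,\mathcal{F}_{n_s}]\cap[M_n]^{<\infty}\subseteq\mathcal{S}_{\eta_n}$ for all $(0,n_1,\dots,n_s)\in K_{4^{-n},p_n,\eta_n}$. (All these choices are possible and the objects below refer to any fixed such choice.) *)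

From HB Require Import structures.
From mathcomp Require Import all_boot all_order all_algebra.
From mathcomp Require Import classical_sets reals.
From Stdlib Require Import ClassicalEpsilon.
Set Implicit Arguments. Unset Strict Implicit. Unset Printing Implicit Defensive.
Import Order.TTheory GRing.Theory Num.Theory.

(* Countable ordinals as Brouwer trees, with the usual (extensional)    *)
(* order; ordinals are compared up to [oeq].                             *)
Inductive ord : Type :=
| Ozero : ord
| Osucc : ord -> ord
| Olim : (nat -> ord) -> ord.

Inductive ole : ord -> ord -> Prop :=
| ole_z b : ole Ozero b
| ole_s a b : olt a b -> ole (Osucc a) b
| ole_l f b : (forall k, ole (f k) b) -> ole (Olim f) b
with olt : ord -> ord -> Prop :=
| olt_s a b : ole a b -> olt a (Osucc b)
| olt_l a f k : olt a (f k) -> olt a (Olim f).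

Definition oeq a b := ole a b /\ ole b a.

Definition oone := Osucc Ozero.
Definition otwo := Osucc oone.
Definition ofin (k : nat) : ord := iter k Osucc Ozero.
Definition omega := Olim ofin.

Fixpoint oadd (a b : ord) : ord :=
  match b with
  | Ozero => a
  | Osucc c => Osucc (oadd a c)
  | Olim f => Olim (fun k => oadd a (f k))
  end.

Fixpoint omul (a b : ord) : ord :=
  match b with
  | Ozero => Ozero
  | Osucc c => oadd (omul a c) a
  | Olim f => Olim (fun k => omul a (f k))
  end.

Fixpoint oexp (b : ord) : ord :=
  match b with
  | Ozero => oone
  | Osucc c => omul (oexp c) omega
  | Olim f => Olim (fun k => oexp (f k))
  end.

Definition ord_inh : inhabited ord := inhabits Ozero.

(* l(beta): leading exponent of the Cantor normal form of beta >= 1,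
   i.e. the g with omega^g <= beta < omega^(g+1). *)
Definition ell (b : ord) : ord :=
  epsilon ord_inh (fun g => ole (oexp g) b /\ olt b (oexp (Osucc g))).

Definition is_limit (a : ord) :=
  ~ oeq a Ozero /\ forall b, ~ oeq a (Osucc b).

(* Finite subsets of N = {1,2,...}: strictly increasing seqs of positive *)
Definition fset (s : seq nat) : bool := sorted ltn s && all (fun k => 0 < k)%N s.

Definition fam := seq nat -> Prop.

Definition hereditary (F : fam) :=
  forall s t, F s -> fset t -> {subset t <= s} -> F t.

Definition spreading (F : fam) :=
  forall s t, F s -> fset t -> size t = size s ->
    (forall i, (i < size s)%N -> (nth 0 s i <= nth 0 t i)%N) -> F t.

(* compact in [N]^{<oo} \subseteq 2^N: members are finite sets and F is
   closed in the product topology of 2^N. *)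
Definition compact_fam (F : fam) :=
  (forall s, F s -> fset s) /\
  forall A : nat -> bool,
    (forall N, exists s, F s /\ forall k, (k < N)%N -> (k \in s) = A k) ->
    exists s, F s /\ forall k, (k \in s) = A k.

Definition regular (F : fam) := [/\ hereditary F, spreading F & compact_fam F].

Definition deriv (F : fam) : fam := fun s =>
  fset s /\ forall N, exists t, F t /\ t <> s /\
    forall k, (k < N)%N -> (k \in t) = (k \in s).

Fixpoint CBd (F : fam) (a : ord) : fam :=
  match a with
  | Ozero => F
  | Osucc b => deriv (CBd F b)
  | Olim f => fun s => forall k, CBd F (f k) s
  end.

Definition CBindex (F : fam) (a : ord) :=
  (forall s, ~ CBd F a s) /\ forall b, olt b a -> exists s, CBd F b s.

Definition iota_CB (F : fam) : ord := epsilon ord_inh (CBindex F).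

Definition adm (M : fam) (Es : seq (seq nat)) :=
  all (fun E => (E != [::]) && fset E) Es /\
  sorted (fun A B => (last 0 A < head 0 B)%N) Es /\
  M (map (head 0) Es).

Definition comp (M N : fam) : fam := fun s =>
  exists Es, adm M Es /\ (forall E, E \in Es -> N E) /\ s = flatten Es.

Definition S0 : fam := fun s => fset s && (size s <= 1)%N.
Definition S1 : fam := fun s => fset s && (size s <= head 0 s)%N.

Definition comp_list (Ms : seq fam) : fam := foldl comp S0 Ms.

(* S : ord -> fam is a system of Schreier families for some fixed choice of
   strictly increasing sequences beta_k (k >= 1) with sup beta at limits. *)
Definition schreier_sys (S : ord -> fam) :=
  [/\ (forall a b, oeq a b -> forall s, S a s <-> S b s),
      (forall a, oeq a Ozero -> forall s, S a s <-> S0 s),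
      (forall a b, oeq a (Osucc b) -> forall s, S a s <-> comp S1 (S b) s) &
      (forall a, is_limit a -> exists f : nat -> ord,
          [/\ forall k, (1 <= k)%N -> olt (f k) (f k.+1),
              oeq (Olim (fun k => f k.+1)) a &
              forall s, S a s <-> (s = [::] \/
                 exists k, (1 <= k)%N /\ (k <= head 0 s)%N /\ S (f k) s)])].

Section Real.
Variable R : realType.
Local Open Scope ring_scope.
Local Open Scope classical_set_scope.

Definition tagp (theta : nat -> R) (ns : seq nat) : R := \prod_(k <- ns) theta k.

(* alpha_{n_s} ... alpha_{n_1} for ns = [n_1; ...; n_s] *)
Definition prodA (alpha : nat -> ord) (ns : seq nat) : ord :=
  foldl (fun acc k => omul (alpha k) acc) oone ns.

Definition posl (ns : seq nat) : bool := all (fun k => 0 < k)%N ns.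

(* gamma(eps,m) = max { l(alpha_{n_s}...alpha_{n_1}) : eps theta_{n_1}..theta_{n_s} > theta_m },
   max of the empty set = 0 *)
Definition is_gamma (theta : nat -> R) (alpha : nat -> ord) (eps : R) (m : nat) (g : ord) :=
  let P := fun ns => posl ns /\ theta m < eps * tagp theta ns in
  (forall ns, P ns -> ole (ell (prodA alpha ns)) g) /\
  ((exists ns, P ns /\ oeq (ell (prodA alpha ns)) g) \/
   ((forall ns, ~ P ns) /\ g = Ozero)).

Definition gamma (theta : nat -> R) (alpha : nat -> ord) (eps : R) (m : nat) : ord :=
  epsilon ord_inh (is_gamma theta alpha eps m).

(* N_r and K_{delta,p,eta}: histories (0,n_1,...,n_s) represented by [n_1;...;n_s] *)
Definition inN (theta : nat -> R) (eps : R) (r : nat) (ns : seq nat) : Prop :=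
  posl ns /\ theta r < eps * tagp theta ns.

Definition inK (theta : nat -> R) (alpha : nat -> ord) (delta : R) (p : nat) (eta : ord)
  (ns : seq nat) : Prop :=
  [/\ posl ns, delta * theta p < tagp theta ns & olt (ell (prodA alpha ns)) eta].

Definition card_of (P : seq nat -> Prop) : nat :=
  epsilon (inhabits 0%N) (fun k => exists s : seq (seq nat),
     [/\ uniq s, (forall ns, P ns <-> ns \in s) & size s = k]).

Definition c00 (x : nat -> R) := exists N, forall k, (N <= k)%N -> x k = 0.

Definition fnorm (F : fam) (x : nat -> R) : R :=
  sup [set r | exists s, F s /\ r = \sum_(k <- s) `|x k|].

Definition l1norm (x : nat -> R) : R :=
  sup [set r | exists N, r = \sum_(k < N) `|x k|].

Definition c0norm_on (E : seq nat) (x : nat -> R) : R :=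
  \big[Num.max/0]_(k <- E) `|x k|.

End Real.

(* Trees: a node carries its set E, the index n specified for the      *)
(* admissibility of its immediate successors, and its successors.       *)
Inductive tree : Type := Node : seq nat -> nat -> seq tree -> tree.

Definition node_set (t : tree) : seq nat := let: Node E _ _ := t in E.

Fixpoint tree_adm (F : nat -> fam) (t : tree) : Prop :=
  match t with
  | Node E n ch =>
      fset E /\
      (ch = [::] \/
       [/\ (1 <= n)%N, adm (F n) (map node_set ch) &
           forall E', E' \in map node_set ch -> {subset E' <= E}]) /\
      (fix all_adm (l : seq tree) : Prop :=
         match l with [::] => True | c :: l' => tree_adm F c /\ all_adm l' end) ch
  end.

(* leaves together with their histories (n_1,...,n_m), given the history h
   of the current node *)
Fixpoint leaves (t : tree) (h : seq nat) : seq (seq nat * seq nat) :=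
  match t with
  | Node E n ch =>
      if ch is [::] then [:: (E, h)]
      else (fix lv (l : seq tree) : seq (seq nat * seq nat) :=
              match l with [::] => [::] | c :: l' => leaves c (rcons h n) ++ lv l' end) ch
  end.

Section Real2.
Variable R : realType.
Local Open Scope ring_scope.

Definition tree_eval (theta : nat -> R) (t : tree) (x : nat -> R) : R :=
  \sum_(l <- leaves t [::]) tagp theta l.2 * c0norm_on l.1 x.

(* (p,q)-restricted: every leaf lies in a node G (G on the path from the root
   to the leaf; the histories of those nodes are the prefixes of the leaf's
   history) with h(G) in N_q \ N_p. *)
Definition restricted (theta : nat -> R) (eps : R) (p q : nat) (t : tree) :=
  forall l, l \in leaves t [::] ->
    exists i, (i <= size l.2)%N /\
      inN theta eps q (take i l.2) /\ ~ inN theta eps p (take i l.2).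

Definition eta_of (theta : nat -> R) (alpha : nat -> ord) (eps : R) (p q : nat -> nat)
  (n : nat) : ord :=
  if n is 1%N then Osucc (gamma theta alpha eps (p 1%N))
  else Osucc (oadd (gamma theta alpha eps (p n)) (gamma theta alpha eps (q n.-1))).

Definition infinite_set (A : pred nat) := forall N, exists k, (N < k)%N /\ A k.

Definition inM (A : pred nat) (s : seq nat) : Prop := all A s.

Definition four_pow (n : nat) : R := (4%:R ^+ n)^-1.

Definition construction (theta : nat -> R) (F : nat -> fam) (eps : R) (S : ord -> fam)
  (beta : nat -> ord) (M : nat -> pred nat) (p q : nat -> nat) :=
  let alpha := fun k => iota_CB (F k) in
  let gam := gamma theta alpha eps in
  let eta := eta_of theta alpha eps p q in
  [/\ (forall k, M 0%N k -> (0 < k)%N) /\ infinite_set (M 0%N),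
      (forall n, (1 <= n)%N ->
         [/\ (1 <= p n)%N, (1 <= q n)%N, (forall k, M n k -> M n.-1 k)
           & infinite_set (M n)]),
      [/\ theta (p 1%N) <= eps ^+ 2 * four_pow 1,
          olt (oadd (oadd (gam (p 1%N)) otwo) (beta 1%N)) (ell (alpha (p 1%N))) &
          theta (q 1%N) <= eps * theta (p 1%N) * four_pow 1],
      (forall n, (2 <= n)%N ->
         [/\ (q n.-1 < p n)%N,
             theta (p n) <= eps ^+ 2 * four_pow n,
             olt (oadd
                   (foldl (fun acc i => oadd (oadd acc (eta i)) oone)
                      (oadd (oadd (oadd (gam (p n)) otwo) (gam (q n.-1))) otwo)
                      (rev (iota 1 n.-1)))
                   (beta n))
                 (ell (alpha (p n))),
             (p n < q n)%N &
             theta (q n) <= eps * theta (p n) * four_pow n]) &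
      (forall n, (1 <= n)%N ->
         (forall s, inM (M n) s ->
            foldl comp (S (beta n)) [seq S (Osucc (eta i)) | i <- iota 1 n] s ->
            F (p n) s) /\
         (forall ns, inK theta alpha (four_pow n) (p n) (eta n) ns ->
            forall s, inM (M n) s -> comp_list [seq F i | i <- ns] s ->
            S (eta n) s))].

End Real2.

(* Split the leaves of the tree according to whether their history
   (n_1, ..., n_s) lies in the finite set K = K_{4^-n, p_n, eta_n}.
   For a fixed history in K, picking in every leaf E with that history a point
   where |x| attains ||E x||_{c_0} gives a set in [F_{n_1}, ..., F_{n_s}]
   (hereditary and spreading families, plus associativity of M[N]) supported
   in M_n, hence in S_{eta_n}; so all leaves with histories in K contribute
   at most |K| ||x||_{S_{eta_n}} <= 4^-n.
   A leaf outside K either has tag at most 4^-n theta_{p_n}, or satisfies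
   l(alpha_{n_s} ... alpha_{n_1}) >= eta_n > gamma(eps, p_n), which forces
   eps t(E) <= theta_{p_n}.  In a (p_m, q_m)-restricted tree the history splits
   as G ++ r with G in N_{q_m} \ N_{p_m}, a subset of N_{q_{n-1}}; then
   eps t(G) <= theta_{p_m} <= eps^2 4^-m, and l(alpha beta) <= l(alpha) + l(beta)
   together with eta_n > gamma(eps, p_n) + gamma(eps, q_{n-1}) forces
   eps t(r) <= theta_{p_n}, so t(E) <= 4^-m theta_{p_n}.
   Since the leaves are disjoint, these tags times ||E x||_{c_0} sum to at
   most the tag bound times ||x||_{l_1}. *)

From Pilot Require Import Defs.
From HB Require Import structures.
From mathcomp Require Import all_boot all_order all_algebra.
From mathcomp Require Import classical_sets reals boolp.
From mathcomp Require Import lra.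
From Stdlib Require Import ClassicalEpsilon Classical.
Import Order.TTheory GRing.Theory Num.Theory.
Set Implicit Arguments. Unset Strict Implicit. Unset Printing Implicit Defensive.

(** * Countable ordinals *)

Lemma nolt_Ozero a : ~ olt a Ozero.
Proof. by move=> H; inversion H. Qed.

Lemma ole_OsuccE a b : ole (Osucc a) b -> olt a b.
Proof. by move=> H; inversion H. Qed.

Lemma ole_OlimE f b : ole (Olim f) b -> forall k, ole (f k) b.
Proof. by move=> H; inversion H. Qed.

Lemma olt_OsuccE a b : olt a (Osucc b) -> ole a b.
Proof. by move=> H; inversion H. Qed.

Lemma olt_OlimE a f : olt a (Olim f) -> exists k, olt a (f k).
Proof. by move=> H; inversion H; eauto. Qed.

Lemma ole_Olim x f k : ole x (f k) -> ole x (Olim f).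
Proof.
elim: x => [|x IH|g IH] H; first exact: ole_z.
- by apply/ole_s/(olt_l (k := k))/ole_OsuccE.
- by apply: ole_l => j; apply/IH/(ole_OlimE H).
Qed.

Lemma ole_refl a : ole a a.
Proof.
elim: a => [|a IH|f IH]; first exact: ole_z.
- exact/ole_s/olt_s.
- by apply: ole_l => k; apply: (@ole_Olim _ _ k).
Qed.

Lemma ole_Olim_k f k : ole (f k) (Olim f).
Proof. exact/ole_Olim/ole_refl. Qed.

Lemma ole_Osucc a b : ole a b -> ole (Osucc a) (Osucc b).
Proof. by move=> H; apply/ole_s/olt_s. Qed.

Lemma ole_Olim_mono f g : (forall k, ole (f k) (g k)) -> ole (Olim f) (Olim g).
Proof. by move=> H; apply: ole_l => k; apply: (@ole_Olim _ _ k). Qed.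

(* Once [ole a b -> olt b c -> olt a c] is known for a fixed [c], the two
   other transitivity laws at [c] follow by induction on the middle,
   resp. the left, ordinal. *)
Section TransitivityAt.
Variable c : ord.
Hypothesis ole_olt_c : forall a b, ole a b -> olt b c -> olt a c.

Lemma olt_ole_trans_at a b : olt a b -> ole b c -> olt a c.
Proof.
elim: b a => [|b _|f IH] a; first by move/nolt_Ozero.
- by move=> /olt_OsuccE Hab /ole_OsuccE; apply: ole_olt_c.
- by move=> /olt_OlimE [k Hk] /ole_OlimE /(_ k); apply: IH.
Qed.

Lemma ole_trans_at a b : ole a b -> ole b c -> ole a c.
Proof.
elim: a => [|a _|f IH] Hab Hbc; first exact: ole_z.
- exact/ole_s/(olt_ole_trans_at (ole_OsuccE Hab)).
- by apply: ole_l => k; apply: IH (ole_OlimE Hab k) Hbc.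
Qed.

End TransitivityAt.

Lemma ole_olt_trans a b c : ole a b -> olt b c -> olt a c.
Proof.
elim: c a b => [|c IH|g IH] a b Hab; first by move/nolt_Ozero.
- by move/olt_OsuccE=> Hbc; apply/olt_s/(ole_trans_at IH Hab).
- by move/olt_OlimE=> [k Hk]; apply: (olt_l (k := k)); apply: IH Hab Hk.
Qed.

Lemma olt_ole_trans a b c : olt a b -> ole b c -> olt a c.
Proof. by apply: olt_ole_trans_at => a' b'; apply: ole_olt_trans. Qed.

Lemma ole_trans a b c : ole a b -> ole b c -> ole a c.
Proof. by apply: ole_trans_at => a' b'; apply: ole_olt_trans. Qed.

Lemma ole_succ a : ole a (Osucc a).
Proof.
elim: a => [|a IH|f IH]; first exact: ole_z.
- exact: ole_Osucc.
- apply: ole_l => k; apply: ole_trans (IH k) _.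
  exact/ole_Osucc/ole_Olim_k.
Qed.

Lemma olt_succ a : olt a (Osucc a).
Proof. exact/olt_s/ole_refl. Qed.

Lemma olt_ole a b : olt a b -> ole a b.
Proof.
elim: b => [|b _|f IH]; first by move/nolt_Ozero.
- by move/olt_OsuccE/ole_trans; apply; apply: ole_succ.
- by move/olt_OlimE=> [k /IH]; apply: ole_Olim.
Qed.

Lemma olt_wf : well_founded olt.
Proof.
suff acc b : forall a, olt a b -> Acc olt a by move=> a; constructor=> c /acc.
elim: b => [|b IH|f IH] a; first by move/nolt_Ozero.
- by move/olt_OsuccE=> Hab; constructor=> c Hca; apply: IH (olt_ole_trans Hca Hab).
- by move/olt_OlimE=> [k]; apply: IH.
Qed.

Lemma olt_irr a : ~ olt a a.
Proof. by elim: (olt_wf a) => {}a _ IH Haa; apply: (IH a). Qed.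

Lemma ole_oltF a b : ole a b -> ~ olt b a.
Proof. by move=> Hab Hba; apply: olt_irr (ole_olt_trans Hab Hba). Qed.

Lemma ole_Olim_or_olt f b :
  (forall k, ole (f k) b \/ olt b (f k)) -> ole (Olim f) b \/ olt b (Olim f).
Proof.
move=> H; have [[k Hk]|Hn] := classic (exists k, olt b (f k)).
  by right; apply: olt_l Hk.
by left; apply: ole_l => k; case: (H k) => // Hk; case: Hn; exists k.
Qed.

Lemma olt_or_Olim_ole a g :
  (forall k, olt a (g k) \/ ole (g k) a) -> olt a (Olim g) \/ ole (Olim g) a.
Proof.
move=> H; have [[k Hk]|Hn] := classic (exists k, olt a (g k)).
  by left; apply: olt_l Hk.
by right; apply: ole_l => k; case: (H k) => // Hk; case: Hn; exists k.
Qed.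

Lemma ord_total_all a b : (ole a b \/ olt b a) /\ (olt a b \/ ole b a).
Proof.
elim: a b => [|a IH|f IH] b.
- split; first by left; apply: ole_z.
  elim: b => [|b _|g IHg]; first by right; apply: ole_z.
  + by left; apply/olt_s/ole_z.
  + exact: olt_or_Olim_ole.
- split; first by case: (IH b) => _ [H|H]; [left; apply: ole_s | right; apply: olt_s].
  elim: b => [|b _|g IHg]; first by right; apply: ole_z.
  + by case: (IH b) => _ [H|H]; [left; apply/olt_s/ole_s | right; apply/ole_s/olt_s].
  + exact: olt_or_Olim_ole.
- have Hle c : ole (Olim f) c \/ olt c (Olim f).
    by apply: ole_Olim_or_olt => k; case: (IH k c).
  split; first exact: Hle.
  elim: b => [|b _|g IHg]; first by right; apply: ole_z.
  + by case: (Hle b) => H; [left; apply: olt_s | right; apply: ole_s].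
  + exact: olt_or_Olim_ole.
Qed.

Lemma ord_total a b : ole a b \/ olt b a.
Proof. exact: (ord_total_all a b).1. Qed.

Lemma not_olt_ole a b : ~ olt b a -> ole a b.
Proof. by case: (ord_total a b). Qed.

Section NormalFunction.
Variables (phi psi : ord -> ord) (c : ord).
Hypothesis phi0 : phi Ozero = c.
Hypothesis phiS : forall y, phi (Osucc y) = psi (phi y).
Hypothesis phiL : forall f, phi (Olim f) = Olim (fun k => phi (f k)).
Hypothesis psi_mono : forall z z', ole z z' -> ole (psi z) (psi z').
Hypothesis psi_infl : forall z, ole z (psi z).

Lemma normal_base y : ole c (phi y).
Proof.
elim: y => [|y IH|f IH]; first by rewrite phi0; apply: ole_refl.
- by rewrite phiS; apply: ole_trans IH (psi_infl _).
- by rewrite phiL; apply: ole_trans (IH 0) (ole_Olim_k _ 0).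
Qed.

Lemma normal_mono_all y' y :
  (ole y y' -> ole (phi y) (phi y')) /\ (olt y y' -> ole (psi (phi y)) (phi y')).
Proof.
elim: y' y => [|y' IH|g IH] y.
- split=> [|/nolt_Ozero //].
  elim: y => [|y _|f IHf] H; first exact: ole_refl.
  + by move/ole_OsuccE/nolt_Ozero: H.
  + by rewrite phiL; apply: ole_l => k; apply/IHf/(ole_OlimE H).
- have Hlt z : olt z (Osucc y') -> ole (psi (phi z)) (phi (Osucc y')).
    by move/olt_OsuccE=> Hz; rewrite phiS; apply/psi_mono/(IH z).1.
  split; last exact: Hlt.
  elim: y => [|y _|f IHf] H.
  + by rewrite phi0; apply: normal_base.
  + by rewrite phiS; apply/Hlt/ole_OsuccE.
  + by rewrite phiL; apply: ole_l => k; apply/IHf/(ole_OlimE H).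
- have Hlt z : olt z (Olim g) -> ole (psi (phi z)) (phi (Olim g)).
    move/olt_OlimE=> [k Hk]; rewrite phiL.
    exact: ole_trans ((IH k z).2 Hk) (ole_Olim_k _ _).
  split; last exact: Hlt.
  elim: y => [|y _|f IHf] H.
  + by rewrite phi0; apply: normal_base.
  + by rewrite phiS; apply/Hlt/ole_OsuccE.
  + by rewrite phiL; apply: ole_l => k; apply/IHf/(ole_OlimE H).
Qed.

Lemma normal_mono y y' : ole y y' -> ole (phi y) (phi y').
Proof. exact: (normal_mono_all y' y).1. Qed.

End NormalFunction.

Lemma oadd0o a : oadd Ozero a = a.
Proof. by elim: a => [|a /= ->|f IH] //=; congr Olim; apply: funext. Qed.

Lemma oaddA a b c : oadd a (oadd b c) = oadd (oadd a b) c.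
Proof. by elim: c => [|c /= ->|f IH] //=; congr Olim; apply: funext. Qed.

Lemma omulo1 a : omul a oone = a.
Proof. by rewrite /= oadd0o. Qed.

Lemma omul1o a : omul oone a = a.
Proof. by elim: a => [|a /= ->|f IH] //=; congr Olim; apply: funext. Qed.

Lemma omulDr a b c : omul a (oadd b c) = oadd (omul a b) (omul a c).
Proof. by elim: c => [|c /= ->|f IH]; rewrite ?oaddA //=; congr Olim; apply: funext. Qed.

Lemma omulA a b c : omul a (omul b c) = omul (omul a b) c.
Proof. by elim: c => [|c /= <-|f IH]; rewrite ?omulDr //=; congr Olim; apply: funext. Qed.

Lemma oexpD x y : oexp (oadd x y) = omul (oexp x) (oexp y).
Proof.
elim: y => [|y IH|f IH]; first by rewrite /= oadd0o.
- change (omul (oexp (oadd x y)) omega = omul (oexp x) (omul (oexp y) omega)).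
  by rewrite IH omulA.
- by congr Olim; apply: funext.
Qed.

Lemma oadd_fin a b : oadd (ofin a) (ofin b) = ofin (a + b).
Proof. by elim: b => [|b IH]; rewrite ?addn0 // addnS /= IH. Qed.

Lemma omul_fin a b : omul (ofin a) (ofin b) = ofin (a * b).
Proof. by elim: b => [|b IH]; rewrite ?muln0 // mulnS /= IH oadd_fin addnC. Qed.

Lemma oadd_mono_r a y y' : ole y y' -> ole (oadd a y) (oadd a y').
Proof. by apply: (@normal_mono (oadd a) Osucc a) => //; [apply: ole_Osucc | apply: ole_succ]. Qed.

Lemma oadd_infl a b : ole a (oadd a b).
Proof. by apply: (@normal_base (oadd a) Osucc a) => //; apply: ole_succ. Qed.

Lemma oadd_mono_l a a' c : ole a a' -> ole (oadd a c) (oadd a' c).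
Proof.
move=> H; elim: c => [|c IH|f IH] //=; [exact: ole_Osucc | exact: ole_Olim_mono].
Qed.

Lemma oadd_mono a a' b b' : ole a a' -> ole b b' -> ole (oadd a b) (oadd a' b').
Proof. by move=> /(oadd_mono_l b) H1 /(oadd_mono_r a') H2; apply: ole_trans H1 H2. Qed.

Lemma olt_oadd a y : olt Ozero y -> olt a (oadd a y).
Proof.
elim: y => [|y IH|f IH] /=; first by move/nolt_Ozero.
- by move=> _; apply/olt_s/oadd_infl.
- by move/olt_OlimE=> [k Hk]; apply: (olt_l (k := k)); apply: IH.
Qed.

Lemma omul_mono_r a y y' : ole y y' -> ole (omul a y) (omul a y').
Proof.
apply: (@normal_mono (omul a) (oadd^~ a) Ozero) => // [z z'|z].
  exact: oadd_mono_l.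
exact: oadd_infl.
Qed.

Lemma omul_mono_l a a' c : ole a a' -> ole (omul a c) (omul a' c).
Proof.
move=> H; elim: c => [|c IH|f IH] /=; first exact: ole_refl.
- exact: oadd_mono IH H.
- exact: ole_Olim_mono.
Qed.

Lemma omul_mono a a' b b' : ole a a' -> ole b b' -> ole (omul a b) (omul a' b').
Proof. by move=> /(omul_mono_l b) H1 /(omul_mono_r a') H2; apply: ole_trans H1 H2. Qed.

Lemma oone_le_omul a b : ole oone a -> ole oone b -> ole oone (omul a b).
Proof. by move=> Ha Hb; have := omul_mono Ha Hb; rewrite omulo1. Qed.

Lemma ole_omul_omega z : ole z (omul z omega).
Proof. by apply: (@ole_Olim _ _ 1); rewrite /= oadd0o; apply: ole_refl. Qed.

Lemma oexp_mono y y' : ole y y' -> ole (oexp y) (oexp y').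
Proof.
apply: (@normal_mono oexp (omul^~ omega) oone) => //; last exact: ole_omul_omega.
by move=> z z'; apply: omul_mono_l.
Qed.

Lemma oone_le_oexp y : ole oone (oexp y).
Proof. by apply: (@normal_base oexp (omul^~ omega) oone) => //; apply: ole_omul_omega. Qed.

Lemma oexp_gt0 y : olt Ozero (oexp y).
Proof. exact: olt_ole_trans (olt_succ _) (oone_le_oexp y). Qed.

Lemma omul_fin_lt_omega X j : olt Ozero X -> olt (omul X (ofin j)) (omul X omega).
Proof. by move=> HX; apply: (olt_l (k := j.+1)); apply: olt_oadd. Qed.

Lemma olt_oexp_succ y : olt (oexp y) (oexp (Osucc y)).
Proof. by have := omul_fin_lt_omega 1 (oexp_gt0 y); rewrite -[ofin 1]/oone omulo1. Qed.

Lemma oexp_lt_inv g h : olt (oexp g) (oexp h) -> olt g h.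
Proof. by move=> H; case: (ord_total h g) => // /oexp_mono /ole_oltF. Qed.

Lemma ole_oexp b : ole b (oexp b).
Proof.
elim: b => [|b IH|f IH]; first exact: ole_z.
- exact/ole_s/(ole_olt_trans IH (olt_oexp_succ b)).
- by apply: ole_Olim_mono.
Qed.

Lemma oexp_lt1 c : olt c oone -> ole (oexp c) oone.
Proof. by move/olt_OsuccE/oexp_mono. Qed.

Lemma olt_oexp g B : olt B (oexp g) ->
  olt B oone \/ exists2 g', olt g' g & olt B (oexp (Osucc g')).
Proof.
elim: g B => [|g IH|f IH] B; first by left.
- by right; exists g => //; apply: olt_succ.
- move/olt_OlimE=> [k /IH [|[g' H1 H2]]]; first by left.
  by right; exists g' => //; apply: olt_ole_trans H1 (ole_Olim_k _ k).
Qed.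

Lemma ell_spec B : ole oone B ->
  ole (oexp (ell B)) B /\ olt B (oexp (Osucc (ell B))).
Proof.
move=> HB; apply: (epsilon_spec ord_inh (fun g => ole (oexp g) B /\ olt B (oexp (Osucc g)))).
pose Q g := olt B (oexp (Osucc g)).
have [g [Qg Hmin]] : exists g, Q g /\ forall g', olt g' g -> ~ Q g'.
  apply: NNPP => Hn; suff : ~ Q B.
    by apply; apply: ole_olt_trans (ole_oexp B) (olt_oexp_succ B).
  elim: (olt_wf B) => g0 _ IH Qg0; apply: Hn; exists g0; split=> // g' /IH.
exists g; split=> //; apply: not_olt_ole => /olt_oexp [H1|[g' H1 H2]].
- exact: ole_oltF HB H1.
- exact: Hmin H1 H2.
Qed.

Lemma omul_fin_omega i : ole (omul (ofin i) omega) omega.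
Proof. by rewrite /omega /=; apply: ole_l => k; rewrite omul_fin; apply: ole_Olim_k. Qed.

Lemma omul_fin_oexp i b : ole oone b -> ole (omul (ofin i) (oexp b)) (oexp b).
Proof.
have fin_small c : olt c oone -> ole (omul (ofin i) (oexp c)) (ofin i).
  by move/oexp_lt1/(omul_mono_r (ofin i)); rewrite omulo1.
elim: b => [|c IH|f IH] Hb; first by move/ole_OsuccE/nolt_Ozero: Hb.
- change (ole (omul (ofin i) (omul (oexp c) omega)) (omul (oexp c) omega)).
  rewrite omulA; case: (ord_total oone c) => Hc.
    exact/omul_mono_l/IH.
  apply: ole_trans (omul_mono_l _ (fin_small _ Hc)) _.
  apply: ole_trans (omul_fin_omega i) _.
  by rewrite -{1}(omul1o omega); apply/omul_mono_l/oone_le_oexp.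
- apply: ole_l => k; case: (ord_total oone (f k)) => Hk.
    exact: ole_trans (IH k Hk) (ole_Olim_k (fun k => oexp (f k)) k).
  apply: ole_trans (fin_small _ Hk) _.
  move/ole_OsuccE/olt_OlimE: Hb => [j /ole_s /oexp_mono Hj].
  apply: ole_trans (ole_Olim_k ofin i) _.
  rewrite -[Olim ofin](omul1o omega).
  exact: ole_trans Hj (ole_Olim_k (fun k => oexp (f k)) j).
Qed.

Lemma ell_omul A B : ole oone A -> ole oone B ->
  ole (ell (omul A B)) (oadd (ell A) (ell B)).
Proof.
move=> HA HB; have HAB := oone_le_omul HA HB.
case: (ell_spec HA) => _ /olt_OlimE [i Hi].
case: (ell_spec HB) => _ /olt_OlimE [j Hj].
case: (ell_spec HAB) => HAB1 _.
set a := ell A in Hi *; set b := ell B in Hj *.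
suff Hlt : olt (omul A B) (oexp (Osucc (oadd a b))).
  exact/olt_OsuccE/oexp_lt_inv/(ole_olt_trans HAB1 Hlt).
have HA' := olt_ole Hi; have HB' := olt_ole Hj.
case: (ord_total oone b) => Hb.
- (* A B <= omega^a i omega^b j = omega^(a+b) j *)
  apply: ole_olt_trans (omul_mono HA' HB') _.
  rewrite omulA -(omulA (oexp a)).
  apply: ole_olt_trans (omul_mono_l _ (omul_mono_r _ (omul_fin_oexp i Hb))) _.
  by rewrite -oexpD; apply: omul_fin_lt_omega (oexp_gt0 _).
- (* B <= j is finite, so A B <= omega^a (i j) *)
  have HBj : ole B (ofin j).
    apply: ole_trans HB' _; rewrite -{2}(omul1o (ofin j)).
    exact/omul_mono_l/oexp_lt1.
  apply: ole_olt_trans (omul_mono HA' HBj) _.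
  rewrite -omulA omul_fin.
  apply: olt_ole_trans (omul_fin_lt_omega _ (oexp_gt0 a)) _.
  exact/(oexp_mono (y := Osucc a))/ole_Osucc/oadd_infl.
Qed.

Lemma ord_max_seq (T : eqType) (f : T -> ord) (s : seq T) : s != [::] ->
  exists2 x, x \in s & forall y, y \in s -> ole (f y) (f x).
Proof.
elim: s => // a s IH _; have [->|/IH [x Hx Hmax]] := eqVneq s [::].
  by exists a; rewrite ?mem_head // => y; rewrite inE => /eqP ->; apply: ole_refl.
case: (ord_total (f a) (f x)) => H.
  by exists x => [|y /[1!inE] /orP [/eqP ->|/Hmax]]; rewrite ?inE ?Hx ?orbT.
exists a => [|y /[1!inE] /orP [/eqP ->|/Hmax Hy]]; rewrite ?mem_head //; first exact: ole_refl.
exact: ole_trans Hy (olt_ole H).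
Qed.

Lemma prodA_cat alpha G r : prodA alpha (G ++ r) = omul (prodA alpha r) (prodA alpha G).
Proof.
have foldE s X : foldl (fun acc k => omul (alpha k) acc) X s = omul (prodA alpha s) X.
  elim: s X => [|k s IH] X /=; first by rewrite omul1o.
  by rewrite IH [in RHS]/prodA /= IH oadd0o omulA.
by rewrite /prodA foldl_cat foldE.
Qed.

Lemma oone_le_prodA alpha s : (forall k, (1 <= k)%N -> ole oone (alpha k)) ->
  posl s -> ole oone (prodA alpha s).
Proof.
move=> Ha; suff gen X : ole oone X -> posl s ->
    ole oone (foldl (fun acc k => omul (alpha k) acc) X s) by apply/gen/ole_refl.
elim: s X => //= k s IH X HX /andP [Hk Hs]; apply: IH Hs.
exact: oone_le_omul (Ha k Hk) HX.
Qed.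

(** * Admissible collections and composed families *)

Lemma allrel_subset (T S : eqType) (r : T -> S -> bool) xs ys xs' ys' :
  {subset xs' <= xs} -> {subset ys' <= ys} -> allrel r xs ys -> allrel r xs' ys'.
Proof.
by move=> H1 H2 /allrelP H; apply/allrelP => u v /H1 Hu /H2 Hv; apply: H.
Qed.

Lemma pairwise_flatten T (r : rel T) L :
  pairwise r (flatten L) = all (pairwise r) L && pairwise (allrel r) L.
Proof.
elim: L => //= A L IH; rewrite pairwise_cat IH.
have -> : allrel r A (flatten L) = all (allrel r A) L.
  by elim: L {IH} => [|B L IH'] /=; rewrite ?allrel0r ?allrel_catr ?IH'.
by rewrite -!andbA; bool_congr.
Qed.

Lemma fset_uniq E : fset E -> uniq E.
Proof. by case/andP=> /(sorted_uniq ltn_trans ltnn). Qed.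

Lemma fset_gt0 E u : fset E -> u \in E -> 0 < u.
Proof. by case/andP=> _ /allP H /H. Qed.

Lemma fset_head_le E u : fset E -> u \in E -> head 0 E <= u.
Proof.
case: E => // a E /andP [/= Hs _]; rewrite inE => /orP [/eqP -> //|Hu].
by have /allP/(_ u Hu)/ltnW := order_path_min ltn_trans Hs.
Qed.

Lemma fset_le_last E u : fset E -> u \in E -> u <= last 0 E.
Proof.
case/andP=> Hs _; elim: E u Hs => // a [|b E] IH u /= Hs; first by rewrite inE => /eqP ->.
have /andP [Hab Hs'] := Hs.
rewrite inE => /orP [/eqP ->|Hu]; last exact: IH.
exact: leq_trans (ltnW Hab) (IH _ Hs' (mem_head _ _)).
Qed.

Definition block (E : seq nat) : bool := (E != [::]) && fset E.

Definition blocks (Es : seq (seq nat)) : bool :=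
  all block Es && pairwise (allrel ltn) Es.

Lemma block_head E : block E -> head 0 E \in E.
Proof. by case: E => // a E _; rewrite mem_head. Qed.

Lemma block_ltE A B : block A -> block B -> (last 0 A < head 0 B) = allrel ltn A B.
Proof.
move=> HA HB; have /andP [_ fA] := HA; have /andP [_ fB] := HB.
apply/idP/allrelP => [H u v Hu Hv|H].
  exact: leq_ltn_trans (fset_le_last fA Hu) (leq_trans H (fset_head_le fB Hv)).
apply: H (block_head HB); case: A HA {fA} => // a A _; exact: mem_last.
Qed.

Lemma adm_blocksE M Es : adm M Es <-> blocks Es /\ M (map (head 0) Es).
Proof.
have trans : {in block & &, transitive (allrel ltn)}.
  move=> B A C /block_head HB _ _ /allrelP H1 /allrelP H2.
  by apply/allrelP => u v Hu Hv; apply: ltn_trans (H1 _ _ Hu HB) (H2 _ _ HB Hv).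
split=> [[Hall [Hs HM]]|[/andP [Hall Hp] HM]].
  split=> //; rewrite /blocks Hall -(sorted_pairwise_in trans) //.
  by rewrite -(eq_in_sorted (P := block) block_ltE).
split=> //; split=> //.
by rewrite (eq_in_sorted (P := block) block_ltE) // (sorted_pairwise_in trans).
Qed.

Lemma all_flatten T (a : pred T) L : all a (flatten L) = all (all a) L.
Proof. by elim: L => //= A L IH; rewrite all_cat IH. Qed.

Lemma allrel_flatten (T S : Type) (r : T -> S -> bool) X Y :
  allrel r (flatten X) (flatten Y) = allrel (allrel r) X Y.
Proof.
elim: X => //= A X IH; rewrite allrel_catl IH; congr andb.
by elim: Y {IH} => [|B Y IH'] /=; rewrite ?allrel0r ?allrel_catr ?IH'.
Qed.

Lemma blocks_fset Es : blocks Es -> fset (flatten Es).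
Proof.
case/andP=> Hall Hp; apply/andP; split.
  rewrite (sorted_pairwise ltn_trans) pairwise_flatten Hp andbT.
  by apply/allP => E /(allP Hall) /and3P [_ + _]; rewrite (sorted_pairwise ltn_trans).
by rewrite all_flatten; apply/allP => E /(allP Hall) /and3P [].
Qed.

Lemma adm_fset M Es : adm M Es -> fset (flatten Es).
Proof. by case/adm_blocksE=> /blocks_fset. Qed.

Lemma blocks_subseq Es Es' : subseq Es' Es -> blocks Es -> blocks Es'.
Proof.
move=> Hsub /andP [Hall Hp]; apply/andP; split.
  by apply/allP => E /(mem_subseq Hsub) /(allP Hall).
exact: subseq_pairwise Hsub Hp.
Qed.

Lemma blocks_subsets (W : seq (seq nat * seq nat)) : blocks (unzip1 W) ->
  (forall p, p \in W -> block p.2 /\ {subset p.2 <= p.1}) -> blocks (unzip2 W).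
Proof.
case/andP=> _ Hp HW; apply/andP; split.
  by apply/allP => E /mapP [p /HW [HE _] ->].
move: Hp; rewrite !pairwise_map; apply: (sub_in_pairwise (P := mem W)) (allss W).
by move=> p1 p2 /HW [_ H1] /HW [_ H2]; apply: allrel_subset.
Qed.

Lemma blocks_flatten L : all blocks L ->
  pairwise (fun X Y => allrel ltn (flatten X) (flatten Y)) L -> blocks (flatten L).
Proof.
move=> HL Hp; apply/andP; split.
  by rewrite all_flatten; apply/allP => Es /(allP HL) /andP [].
rewrite pairwise_flatten; apply/andP; split.
  by apply/allP => Es /(allP HL) /andP [].
by move: Hp; apply: sub_pairwise => X Y; rewrite allrel_flatten.
Qed.

Lemma heads_block Ps : blocks Ps -> Ps != [::] -> block (map (head 0) Ps).
Proof.
case/andP=> Hall Hp HPs; apply/and3P; split; first by case: Ps HPs {Hall Hp}.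
  rewrite (sorted_pairwise ltn_trans) pairwise_map.
  apply: (sub_in_pairwise (P := block)) Hall Hp => A B /block_head HA /block_head HB.
  by move/allrelP; apply.
by apply/allP => u /mapP [E /(allP Hall) /[dup] /block_head + /andP [_ HE] ->]; apply: fset_gt0.
Qed.

Lemma comp_mono (M M' N N' : fam) s : (forall t, M t -> M' t) ->
  (forall t, N t -> N' t) -> Defs.comp M N s -> Defs.comp M' N' s.
Proof.
move=> HM HN [Es [[H1 [H2 /HM H3]] [H4 ->]]]; exists Es.
by split=> //; split=> // E /H4 /HN.
Qed.

Lemma comp_fset M N s : Defs.comp M N s -> fset s.
Proof. by case=> Es [/adm_fset HE [_ ->]]. Qed.

Lemma head_flatten Ps : all block Ps -> head 0 (flatten Ps) = head 0 (map (head 0) Ps).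
Proof. by case: Ps => // [[|a P] Ps]. Qed.

Lemma flatten_map_flatten T (L : seq (seq (seq T))) :
  flatten (map flatten L) = flatten (flatten L).
Proof. by elim: L => //= X L ->; rewrite flatten_cat. Qed.

Lemma heads_sub_flatten Ps : all block Ps -> {subset map (head 0) Ps <= flatten Ps}.
Proof.
by move=> /allP Hall u /mapP [E HE ->]; apply/flattenP; exists E => //; apply/block_head/Hall.
Qed.

Lemma comp_choice N P (As : seq (seq nat)) : (forall A, A \in As -> Defs.comp N P A) ->
  exists g : seq nat -> seq (seq nat), forall A, A \in As ->
    [/\ A = flatten (g A), adm N (g A) & forall E, E \in g A -> P E].
Proof.
move=> HNP; apply: (choice (fun A Ps => A \in As ->
  [/\ A = flatten Ps, adm N Ps & forall E, E \in Ps -> P E])) => A.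
have [HA|HA] := boolP (A \in As); last by exists [::].
by have [Ps [HPs [HE ->]]] := HNP A HA; exists Ps.
Qed.

(* The N-pieces of all the M-blocks, taken together, form an M[N]-admissible
   collection: its heads are the union of the heads of each N-decomposition. *)
Lemma comp_assoc M N P s :
  Defs.comp M (Defs.comp N P) s -> Defs.comp (Defs.comp M N) P s.
Proof.
case=> As [/adm_blocksE [HAs HMAs] [/comp_choice [g Hg] ->]].
have gblocks A : A \in As -> blocks (g A) by case/Hg=> _ /adm_blocksE [].
have gsub A : A \in As -> {subset map (head 0) (g A) <= A}.
  move=> HA; case: (Hg A HA) => HAg _ _; rewrite {2}HAg.
  exact/heads_sub_flatten/(andP (gblocks A HA)).1.
have gblock A : A \in As -> block (map (head 0) (g A)).
  move=> HA; apply: heads_block (gblocks A HA) _.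
  have := allP (proj1 (andP HAs)) A HA; case: (Hg A HA) => HAg _ _.
  by rewrite {1}HAg; case: (g A).
exists (flatten (map g As)); split; last split.
- apply/adm_blocksE; split.
    apply: blocks_flatten; first by apply/allP => X /mapP [A /gblocks ? ->].
    rewrite pairwise_map; apply: (@sub_in_pairwise _ (mem As) (allrel ltn)) (allss As) _.
      by move=> A B /Hg [HA _ _] /Hg [HB _ _] /=; rewrite -HA -HB.
    by case/andP: HAs.
  exists [seq map (head 0) (g A) | A <- As]; split; last split.
  + apply/adm_blocksE; split.
      have := blocks_subsets (W := [seq (A, map (head 0) (g A)) | A <- As]).
      rewrite /unzip1 /unzip2 -!map_comp map_id; apply=> // p /mapP [A HA ->].
      by split; [apply: gblock | apply: gsub].
    suff -> : map (head 0) [seq map (head 0) (g A) | A <- As] = map (head 0) As by [].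
    rewrite -map_comp; apply/eq_in_map => A HA /=.
    case: (Hg A HA) => HAg _ _; rewrite {2}HAg head_flatten //.
    by case/andP: (gblocks A HA).
  + by move=> E /mapP [A /Hg [_ /adm_blocksE [_ HN] _] ->].
  + by rewrite map_flatten -map_comp.
- by move=> E /flatten_mapP [A /Hg [_ _ HPA]]; apply: HPA.
- rewrite -flatten_map_flatten; congr flatten.
  by rewrite -map_comp -{1}(map_id As); apply/eq_in_map => A /Hg [].
Qed.

Lemma comp_S0r M s : Defs.comp M S0 s -> M s.
Proof.
case=> Es [/adm_blocksE [/andP [Hall _] HM] [HS0 ->]].
suff -> : flatten Es = map (head 0) Es by [].
elim: Es Hall HS0 {HM} => //= E Es IH /andP [HE Hall] HS0.
rewrite IH // => [|E' HE']; last by apply: HS0; rewrite inE HE' orbT.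
have /andP [_] := HS0 E (mem_head _ _).
by case: E HE {HS0} => [|a [|b E]].
Qed.

Lemma comp_S0l M s : M s -> fset s -> Defs.comp S0 M s.
Proof.
case: s => [|a s] HM Hs; first by exists [::].
exists [:: a :: s]; split; last by split=> [E /[1!inE] /eqP ->|]; rewrite /= ?cats0.
apply/adm_blocksE; split; first by rewrite /blocks /= /block Hs.
by rewrite /S0 /fset /= andbT (fset_gt0 Hs (mem_head _ _)).
Qed.

Lemma comp_foldl_assoc Ms M (B B' : fam) :
  (forall t, Defs.comp M B t -> B' t) ->
  forall s, Defs.comp M (foldl Defs.comp B Ms) s -> foldl Defs.comp B' Ms s.
Proof.
move=> HB; elim/last_ind: Ms => [|Ms P IH] s; first exact: HB.
by rewrite !foldl_rcons => /comp_assoc; apply: comp_mono.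
Qed.

Lemma comp_list_cons M Ms s :
  Defs.comp M (comp_list Ms) s -> comp_list (M :: Ms) s.
Proof.
by apply: comp_foldl_assoc => t Ht; apply: comp_S0l (comp_S0r Ht) (comp_fset Ht).
Qed.

Lemma comp_list_nil Ms : comp_list Ms [::].
Proof.
elim/last_ind: Ms => // Ms P IH; rewrite /comp_list foldl_rcons.
by exists [::]; split=> //; split=> //; split.
Qed.

Lemma comp_list_fset Ms s : comp_list Ms s -> fset s.
Proof.
by elim/last_ind: Ms => [/andP []|Ms P _]; rewrite // /comp_list foldl_rcons => /comp_fset.
Qed.

Lemma blocks_heads_fset Es : blocks Es -> fset (map (head 0) Es).
Proof. by case: Es => // E Es /heads_block /(_ isT) /andP []. Qed.

(* [W] pairs the sets A_i of an M-admissible collection with subsets B_i in N.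
   Dropping the empty B_i is allowed as M is hereditary, and head B_i >= head A_i
   lets spreading carry the heads of the A_i to those of the B_i. *)
Lemma comp_subsets M N (W : seq (seq nat * seq nat)) :
  hereditary M -> spreading M -> adm M (unzip1 W) ->
  (forall p, p \in W -> [/\ {subset p.2 <= p.1}, fset p.2 & N p.2]) ->
  Defs.comp M N (flatten (unzip2 W)).
Proof.
move=> Mher Mspr /adm_blocksE [HW HMW] Hp.
set W' := [seq p <- W | p.2 != [::]].
have HW'sub : subseq W' W := filter_subseq _ _.
have HW'1 : blocks (unzip1 W') by apply: blocks_subseq (map_subseq _ HW'sub) HW.
have HW'2 : blocks (unzip2 W').
  refine (blocks_subsets HW'1 _) => p; rewrite mem_filter => /andP [Hne /Hp [Hsub Hf _]].
  by rewrite /block Hne Hf.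
exists (unzip2 W'); split; last split.
- apply/adm_blocksE; split=> //.
  have HM1 : M (map (head 0) (unzip1 W')).
    apply: Mher HMW (blocks_heads_fset HW'1) _.
    exact/mem_subseq/map_subseq/map_subseq.
  apply: Mspr HM1 (blocks_heads_fset HW'2) _ _; first by rewrite !size_map.
  move=> i; rewrite !size_map => Hi; rewrite -!map_comp !(nth_map ([::], [::])) //=.
  have HpW' := mem_nth ([::], [::]) Hi; set p := nth _ W' i in HpW' *.
  have /andP [_ Hf1] := allP (proj1 (andP HW'1)) _ (map_f fst HpW').
  move: HpW'; rewrite mem_filter => /andP [Hne /Hp [Hsub Hf2 _]].
  by apply: fset_head_le Hf1 (Hsub _ _); apply: block_head; rewrite /block Hne.
- by move=> E /mapP [p]; rewrite mem_filter => /andP [_ /Hp [_ _ HN]] ->.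
- rewrite /W'; elim: (W) => //= [[A [|b B]] W''] /= IH; by rewrite IH.
Qed.

(** * Admissible trees *)

Lemma In_mem (T : eqType) (x : T) s : List.In x s <-> x \in s.
Proof.
elim: s => //= a s IH; rewrite inE eq_sym.
by split=> [[->|/IH ->]|/orP [/eqP ->|/IH]]; rewrite ?eqxx ?orbT; auto.
Qed.

Lemma sub_In_pairwise T (P : T -> Prop) (r r' : rel T) s :
  (forall a, List.In a s -> P a) -> (forall a b, P a -> P b -> r a b -> r' a b) ->
  pairwise r s -> pairwise r' s.
Proof.
move=> HP Hr; elim: s HP => //= a s IH HP /andP [Ha Hs]; apply/andP; split.
  elim: s {IH Hs} HP Ha => //= b s IH HP /andP [Hab Ha]; apply/andP; split.
    by apply: Hr Hab; apply: HP; [left | right; left].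
  by apply: IH Ha => c [<-|Hc]; apply: HP; [left | right; right].
by apply: IH => // b Hb; apply: HP; right.
Qed.

Lemma mem_map_In T (U : eqType) (f : T -> U) l u :
  u \in map f l -> exists2 c, List.In c l & u = f c.
Proof.
elim: l => //= a l IH; rewrite inE => /orP [/eqP ->|/IH [c Hc ->]]; first by exists a => //; left.
by exists c; first right.
Qed.

Lemma In_map T U (f : T -> U) l c : List.In c l -> List.In (f c) (map f l).
Proof. by elim: l => //= a l IH [->|/IH]; [left | right]. Qed.

Lemma In_all T (p : pred T) l : (forall c, List.In c l -> p c) -> all p l.
Proof. by elim: l => //= a l IH H; rewrite H ?IH //; [move=> c Hc; apply: H; right | left]. Qed.

Lemma mem_flatten_map_In T (U : eqType) (f : T -> seq U) l u :
  u \in flatten (map f l) -> exists2 c, List.In c l & u \in f c.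
Proof.
elim: l => //= a l IH; rewrite mem_cat => /orP [H|/IH [c Hc Hu]]; first by exists a => //; left.
by exists c; first right.
Qed.

(* the generated [tree_ind] has no induction hypothesis for the children *)
Definition tree_ind_In (P : tree -> Prop)
    (H : forall E n ch, (forall c, List.In c ch -> P c) -> P (Node E n ch)) :
    forall t, P t :=
  fix go t := let: Node E n ch := t in H E n ch
    ((fix go_list (l : seq tree) : forall c, List.In c l -> P c :=
       match l with
       | [::] => fun c (Hc : List.In c [::]) => False_ind (P c) Hc
       | c0 :: l' => fun c Hc => match Hc with
           | or_introl e => eq_ind c0 P (go c0) c e
           | or_intror Hc' => go_list l' c Hc' end
       end) ch).

Lemma leavesE E n ch h : leaves (Node E n ch) h =
  if ch is [::] then [:: (E, h)] else flatten (map (leaves^~ (rcons h n)) ch).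
Proof. by case: ch => //= c ch; congr cat; elim: ch => //= c' ch ->. Qed.

Lemma leaves_hist t h : leaves t h = [seq (l.1, h ++ l.2) | l <- leaves t [::]].
Proof.
elim/tree_ind_In: t h => E n ch IH h; rewrite !leavesE.
case: ch IH => [|c ch] IH; first by rewrite /= cats0.
rewrite map_flatten -map_comp; congr flatten.
elim: (c :: ch) IH => //= c' l IHl IH; rewrite IHl => [|c'' Hc'']; last by apply: IH; right.
rewrite (IH c' (or_introl erefl) (rcons h n)) (IH c' (or_introl erefl) [:: n]) -map_comp.
by congr cons; apply: eq_map => l' /=; rewrite cat_rcons.
Qed.

Section AdmissibleTrees.
Variable F : nat -> fam.

Lemma tree_admE E n ch : tree_adm F (Node E n ch) ->
  [/\ fset E, ch = [::] \/ [/\ 1 <= n, adm (F n) (map node_set ch) &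
        forall E', E' \in map node_set ch -> {subset E' <= E}]
    & forall c, List.In c ch -> tree_adm F c].
Proof.
move=> /= [H1 [H2 H3]]; split=> //.
by elim: ch {H2} H3 => //= c ch IH [Hc Hch] c' [<- //|]; apply: IH.
Qed.

Lemma leaves_adm t l : tree_adm F t -> l \in leaves t [::] ->
  [/\ fset l.1, {subset l.1 <= node_set t} & posl l.2].
Proof.
elim/tree_ind_In: t l => E n ch IH l /tree_admE [HE Hch Hc]; rewrite leavesE.
case: ch IH Hch Hc => [|c0 ch] IH Hch Hc.
  by rewrite inE => /eqP ->; split.
case: Hch => // [[Hn Hadm Hsub]].
move/mem_flatten_map_In=> [c Hin]; rewrite leaves_hist => /mapP [l' Hl' ->] /=.
have [H1 H2 H3] := IH c Hin l' (Hc c Hin) Hl'; split=> // [u /H2|].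
  by apply: Hsub; apply/In_mem/In_map.
by rewrite /posl /= Hn.
Qed.

Lemma leaves_pairwise t : tree_adm F t ->
  pairwise (fun l l' => allrel ltn l.1 l'.1) (leaves t [::]).
Proof.
elim/tree_ind_In: t => E n ch IH /tree_admE [HE Hch Hc]; rewrite leavesE.
case: ch IH Hch Hc => [|c0 ch] IH Hch Hc //.
case: Hch => // [[Hn /adm_blocksE [/andP [_ Hpw] _] Hsub]].
rewrite pairwise_flatten all_map pairwise_map; apply/andP; split.
  apply: In_all => c Hin /=; rewrite leaves_hist pairwise_map.
  exact: IH c Hin (Hc c Hin).
rewrite pairwise_map in Hpw; move: Hpw.
apply: (@sub_In_pairwise _ (fun c => List.In c (c0 :: ch))) => [//|c1 c2 H1 H2 /= Hlt].
apply/allrelP => l1 l2; rewrite (leaves_hist c1) (leaves_hist c2).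
move=> /mapP [l1' Hl1 ->] /mapP [l2' Hl2 ->].
have [_ S1 _] := leaves_adm (Hc c1 H1) Hl1; have [_ S2 _] := leaves_adm (Hc c2 H2) Hl2.
exact: allrel_subset S1 S2 Hlt.
Qed.

Lemma leaves_uniq t : tree_adm F t -> uniq (flatten (map fst (leaves t [::]))).
Proof.
move=> Ht; apply: (sorted_uniq ltn_trans ltnn).
rewrite (sorted_pairwise ltn_trans) pairwise_flatten pairwise_map leaves_pairwise // andbT.
by apply/allP => E /mapP [l /(leaves_adm Ht) [/andP [+ _] _ _] ->]; rewrite (sorted_pairwise ltn_trans).
Qed.

Section Picks.
Variables (pk : seq nat -> nat) (ok : pred (seq nat)).
Hypothesis pk_in : forall E, ok E -> pk E \in E.

Definition picks t h := [seq pk l.1 | l <- leaves t [::] & (l.2 == h) && ok l.1].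

Lemma picks_leaf E n h :
  picks (Node E n [::]) h = if (h == [::]) && ok E then [:: pk E] else [::].
Proof. by rewrite /picks leavesE /= eq_sym; case: ifP. Qed.

Lemma picks_node E n c0 ch h : picks (Node E n (c0 :: ch)) h =
  if h is j :: h' then
    if j == n then flatten (map (picks^~ h') (c0 :: ch)) else [::]
  else [::].
Proof.
rewrite /picks leavesE filter_flatten map_flatten -!map_comp.
have shift c : ((map (pk \o fst) \o filter (fun l => (l.2 == h) && ok l.1)) \o leaves^~ [:: n]) c
    = [seq pk l.1 | l <- leaves c [::] & (n :: l.2 == h) && ok l.1].
  by rewrite /= leaves_hist filter_map -map_comp.
rewrite (eq_map shift); case: h {shift} => [|j h].
  by elim: (c0 :: ch) => //= c l ->; rewrite cats0; elim: (leaves c [::]).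
case: eqP => [->|Hjn].
  by congr flatten; apply: eq_map => c; congr map; apply: eq_filter => l; rewrite eqseq_cons eqxx.
elim: (c0 :: ch) => //= c l ->; rewrite cats0; elim: (leaves c [::]) => //= l' L IH.
by rewrite eqseq_cons; case: eqP => // Hnj; case: Hjn.
Qed.

Lemma picks_sub t h : tree_adm F t -> {subset picks t h <= node_set t}.
Proof.
move=> Ht u /mapP [l]; rewrite mem_filter => /andP [/andP [_ Hok] Hl] ->.
by have [_ Hsub _] := leaves_adm Ht Hl; apply/Hsub/pk_in.
Qed.

Hypothesis Freg : forall k, 1 <= k -> regular (F k).

Lemma picks_comp_list t h : tree_adm F t -> comp_list [seq F i | i <- h] (picks t h).
Proof.
elim/tree_ind_In: t h => E n ch IH h /tree_admE [HE Hch Hc].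
case: ch IH Hch Hc => [|c0 ch] IH Hch Hc.
  rewrite picks_leaf; case: ifP => [/andP [/eqP -> HokE]|_]; last exact: comp_list_nil.
  by rewrite /comp_list /= /S0 /fset /= andbT (fset_gt0 HE (pk_in HokE)).
case: Hch => // [[Hn Hadm Hsub]]; have [Hher Hspr _] := Freg Hn.
rewrite picks_node; case: h => [|j h]; first exact: comp_list_nil.
case: eqP => [->|_]; last exact: comp_list_nil.
apply: comp_list_cons.
have := comp_subsets (N := comp_list [seq F i | i <- h])
  (W := [seq (node_set c, picks c h) | c <- c0 :: ch]) Hher Hspr.
rewrite /unzip1 /unzip2 -!map_comp; apply=> // p /mem_map_In [c Hin ->] /=.
have Hcl := IH c Hin h (Hc c Hin).
by split=> //; [apply: picks_sub (Hc c Hin) | apply: comp_list_fset Hcl].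
Qed.

End Picks.
End AdmissibleTrees.

(** * Tags and norms *)

Section Tags.
Variable R : realType.
Local Open Scope ring_scope.

Lemma expr_lt_exists (t c : R) : 0 < t < 1 -> 0 < c -> exists L : nat, t ^+ L < c.
Proof.
case/andP=> t0 t1 c0; set d := t^-1 - 1.
have d0 : 0 < d by rewrite /d subr_gt0 invf_gt1.
have bernoulli (L : nat) : 1 + L%:R * d <= (1 + d) ^+ L.
  elim: L => [|L IH]; first by rewrite mul0r addr0 expr0.
  rewrite exprS -natr1; apply: le_trans (ler_wpM2l _ IH); last by rewrite addr_ge0 // ltW.
  have : 0 <= d * (L%:R * d) by rewrite !mulr_ge0 // ltW.
  lra.
have td : t * (1 + d) = 1 by rewrite /d addrC subrK divff // gt_eqF.
pose L := Num.bound (c^-1 / d); exists L.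
have HL : c^-1 / d < L%:R by apply: archi_boundP; rewrite divr_ge0 // ltW ?invr_gt0.
have tL1 : t ^+ L * (1 + d) ^+ L = 1 by rewrite -exprMn td expr1n.
have HcL : c^-1 < (1 + d) ^+ L.
  apply: lt_le_trans (bernoulli L); move: HL; rewrite ltr_pdivrMr // => H; lra.
rewrite -(ltr_pM2r (x := c^-1)) ?invr_gt0 // divff ?gt_eqF // -tL1 ltr_pM2l //.
exact: exprn_gt0.
Qed.

Variable theta : nat -> R.
Hypothesis theta01 : forall k, (1 <= k)%N -> 0 < theta k < 1.
Hypothesis theta_noninc : forall k, (1 <= k)%N -> theta k.+1 <= theta k.
Hypothesis theta_null : forall e, 0 < e -> exists N, forall k, (N <= k)%N -> theta k < e.

Lemma theta_gt0 k : (1 <= k)%N -> 0 < theta k.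
Proof. by case/theta01/andP. Qed.

Lemma theta_le1 k : (1 <= k)%N -> theta k <= 1.
Proof. by case/theta01/andP=> _ /ltW. Qed.

Lemma theta_anti a b : (1 <= a)%N -> (a <= b)%N -> theta b <= theta a.
Proof.
move=> Ha; elim: b => [|b IH]; first by rewrite leqn0 => /eqP Ha0; rewrite Ha0 in Ha.
rewrite leq_eqVlt => /orP [/eqP <- //|Hab].
exact: le_trans (theta_noninc (leq_trans Ha Hab)) (IH Hab).
Qed.

Lemma tagp_nil : tagp theta [::] = 1.
Proof. by rewrite /tagp big_nil. Qed.

Lemma tagp_cons a s : tagp theta (a :: s) = theta a * tagp theta s.
Proof. by rewrite /tagp big_cons. Qed.

Lemma tagp_cat s1 s2 : tagp theta (s1 ++ s2) = tagp theta s1 * tagp theta s2.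
Proof. by rewrite /tagp big_cat. Qed.

Lemma tagp_gt0 s : posl s -> 0 < tagp theta s.
Proof.
elim: s => [|a s IH]; first by rewrite tagp_nil.
by case/andP=> Ha Hs; rewrite tagp_cons mulr_gt0 ?theta_gt0 ?IH.
Qed.

Lemma tagp_le1 s : posl s -> tagp theta s <= 1.
Proof.
elim: s => [|a s IH]; first by rewrite tagp_nil.
case/andP=> Ha Hs; rewrite tagp_cons mulr_ile1 ?theta_le1 ?IH //.
  exact/ltW/theta_gt0.
exact/ltW/tagp_gt0.
Qed.

Lemma tagp_le_theta s k : posl s -> k \in s -> tagp theta s <= theta k.
Proof.
elim: s => // a s IH /andP [Ha Hs]; rewrite tagp_cons inE => /orP [/eqP ->|Hk].
  by rewrite ler_piMr ?tagp_le1 // ltW ?theta_gt0.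
by apply: le_trans (IH Hs Hk); rewrite ler_piMl ?theta_le1 // ltW ?tagp_gt0.
Qed.

Lemma tagp_le_expr s : posl s -> tagp theta s <= theta 1 ^+ size s.
Proof.
elim: s => [|a s IH]; first by rewrite tagp_nil.
case/andP=> Ha Hs; rewrite tagp_cons exprS.
by rewrite ler_pM ?theta_anti ?IH // ltW ?theta_gt0 ?tagp_gt0.
Qed.

Fixpoint seqs_upto (A : seq nat) (L : nat) : seq (seq nat) :=
  if L is L'.+1 then [::] :: [seq a :: s | a <- A, s <- seqs_upto A L'] else [:: [::]].

Lemma mem_seqs_upto A L s : (size s <= L)%N -> all (mem A) s -> s \in seqs_upto A L.
Proof.
elim: L s => [|L IH] [|a s] //= Hs /andP [Ha HA].
by rewrite inE; apply/orP; right; apply: allpairs_f => //; apply: IH.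
Qed.

(* a tag above [c > 0] bounds both the length and the entries of a history *)
Lemma tagp_gt_finite (c : R) : 0 < c ->
  exists L : seq (seq nat), forall ns, posl ns -> c < tagp theta ns -> ns \in L.
Proof.
move=> c0; have [N HN] := theta_null c0.
have [L0 HL0] := expr_lt_exists (theta01 (leqnn 1)) c0.
exists (seqs_upto (iota 1 N) L0) => ns Hns Htag; apply: mem_seqs_upto.
  rewrite leqNgt; apply/negP => /ltnW HL; move: Htag; apply/negP; rewrite -leNgt.
  apply: le_trans (tagp_le_expr Hns) (le_trans _ (ltW HL0)).
  by rewrite ler_wiXn2l // ?theta_le1 // ltW ?theta_gt0.
apply/allP => k Hk; change (k \in iota 1 N).
rewrite mem_iota (allP Hns k Hk) add1n ltnS leqNgt /=.
apply/negP => /ltnW /HN; apply/negP; rewrite -leNgt.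
exact: le_trans (ltW Htag) (tagp_le_theta Hns Hk).
Qed.

Lemma tagp_gt_enum (P : seq nat -> Prop) (c : R) : 0 < c ->
  (forall ns, P ns -> posl ns /\ c < tagp theta ns) ->
  exists2 s, uniq s & forall ns, P ns <-> ns \in s.
Proof.
move=> c0 HP; have [L HL] := tagp_gt_finite c0.
exists [seq ns <- undup L | `[< P ns >]]; first by rewrite filter_uniq ?undup_uniq.
move=> ns; rewrite mem_filter mem_undup; split=> [Hns|/andP [/asboolP //]].
by have [H1 H2] := HP ns Hns; rewrite HL // andbT; apply/asboolP.
Qed.

Lemma card_ofP (P : seq nat -> Prop) (c : R) : 0 < c ->
  (forall ns, P ns -> posl ns /\ c < tagp theta ns) ->
  exists s, [/\ uniq s, forall ns, P ns <-> ns \in s & size s = card_of P].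
Proof.
move=> c0 /(tagp_gt_enum c0) [s Hu Hs].
have Hex : exists k, exists s : seq (seq nat),
    [/\ uniq s, (forall ns, P ns <-> ns \in s) & size s = k] by exists (size s), s.
exact: (epsilon_spec (inhabits 0%N) _ Hex).
Qed.

Lemma gamma_spec (alpha : nat -> ord) (eps : R) m : (1 <= m)%N -> 0 < eps ->
  is_gamma theta alpha eps m (gamma theta alpha eps m).
Proof.
move=> Hm e0; apply: (epsilon_spec ord_inh); pose P ns := inN theta eps m ns.
have c0 : 0 < theta m / eps by rewrite divr_gt0 ?theta_gt0.
have [s _ Hs] : exists2 s, uniq s & forall ns, P ns <-> ns \in s.
  by apply: tagp_gt_enum c0 _ => ns [H1 H2]; rewrite ltr_pdivrMr // mulrC.
have [Hs0|Hs0] := eqVneq s [::].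
  by exists Ozero; split=> [ns /Hs|]; [rewrite Hs0 | right; split=> // ns /Hs; rewrite Hs0].
have [x Hx Hmax] := ord_max_seq (fun ns => ell (prodA alpha ns)) Hs0.
exists (ell (prodA alpha x)); split=> [ns /Hs /Hmax //|].
by left; exists x; split; [apply/Hs | split; apply: ole_refl].
Qed.

End Tags.

Section C0Norms.
Variable R : realType.
Local Open Scope ring_scope.
Variable x : nat -> R.

Lemma c0norm_on_nil : c0norm_on [::] x = 0.
Proof. by rewrite /c0norm_on big_nil. Qed.

Lemma c0norm_on_cons a E : c0norm_on (a :: E) x = Num.max `|x a| (c0norm_on E x).
Proof. by rewrite /c0norm_on big_cons. Qed.

Lemma c0norm_on_ge0 E : 0 <= c0norm_on E x.
Proof.
by elim: E => [|a E IH]; rewrite ?c0norm_on_nil // c0norm_on_cons le_max IH orbT.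
Qed.

Lemma c0norm_on_le_sum E : c0norm_on E x <= \sum_(k <- E) `|x k|.
Proof.
elim: E => [|a E IH]; first by rewrite c0norm_on_nil big_nil.
by rewrite c0norm_on_cons big_cons ge_max lerDl sumr_ge0 // ler_wpDl.
Qed.

Definition argmax_abs (E : seq nat) : nat :=
  head 0%N [seq k <- E | `|x k| == c0norm_on E x].

Lemma argmax_absP E : c0norm_on E x != 0 ->
  argmax_abs E \in E /\ `|x (argmax_abs E)| = c0norm_on E x.
Proof.
move=> HE; have [k Hk /eqP Hxk] : exists2 k, k \in E & `|x k| == c0norm_on E x.
  elim: E HE => [|a E IH]; first by rewrite c0norm_on_nil eqxx.
  rewrite c0norm_on_cons; case: leP => [_ /IH [k Hk Hxk]|_ _]; last by exists a; rewrite ?mem_head.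
  by exists k => //; rewrite inE Hk orbT.
rewrite /argmax_abs; have mf := mem_filter (fun k => `|x k| == c0norm_on E x) ^~ E.
have : k \in [seq k <- E | `|x k| == c0norm_on E x] by rewrite mf Hxk eqxx.
case: [seq k <- E | _] mf => // a l mf _.
by have := mf a; rewrite mem_head => /esym /andP [/eqP].
Qed.

Lemma sum_c0norm_on_argmax (L : seq (seq nat * seq nat)) h :
  \sum_(l <- L | l.2 == h) c0norm_on l.1 x =
  \sum_(k <- [seq argmax_abs l.1 | l <- L & (l.2 == h) && (c0norm_on l.1 x != 0)]) `|x k|.
Proof.
rewrite big_map big_filter (bigID (fun l => c0norm_on l.1 x != 0)) /=.
rewrite [X in _ + X]big1 ?addr0 => [|l /andP [_]]; last by rewrite negbK => /eqP.
by apply: eq_bigr => l /andP [_ /argmax_absP []].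
Qed.

Lemma ler_sum_subset (I : eqType) (s t : seq I) (f : I -> R) :
  uniq s -> uniq t -> {subset s <= t} -> (forall k, 0 <= f k) ->
  \sum_(k <- s) f k <= \sum_(k <- t) f k.
Proof.
move=> Hs Ht Hst Hf.
have Hp : perm_eq t (s ++ [seq y <- t | y \notin s]).
  apply: uniq_perm => // [|y]; last first.
    by rewrite mem_cat mem_filter; case Hy: (y \in s) => //=; apply: Hst.
  by rewrite cat_uniq Hs filter_uniq // andbT; apply/hasPn => y; rewrite mem_filter => /andP [].
by rewrite (perm_big _ Hp) big_cat /= lerDl sumr_ge0.
Qed.

Lemma sum_abs_le_prefix N s : uniq s -> (forall k, (N <= k)%N -> x k = 0) ->
  \sum_(k <- s) `|x k| <= \sum_(k < N) `|x k|.
Proof.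
move=> Hs HN; rewrite (bigID (fun k => (k < N)%N)) /= [X in _ + X]big1 ?addr0; last first.
  by move=> k; rewrite -leqNgt => /HN ->; rewrite normr0.
rewrite -big_filter -(big_mkord xpredT (fun k => `|x k|)) /index_iota subn0.
apply: ler_sum_subset; rewrite ?filter_uniq ?iota_uniq //.
by move=> k; rewrite mem_filter mem_iota add0n => /andP [-> _].
Qed.

Lemma sum_abs_le_l1norm s : c00 x -> uniq s -> \sum_(k <- s) `|x k| <= l1norm x.
Proof.
case=> N HN Hs; apply: le_trans (sum_abs_le_prefix Hs HN) _.
apply: ub_le_sup; last by exists N.
exists (\sum_(k < N) `|x k|) => _ [N' ->].
rewrite -(big_mkord xpredT (fun k => `|x k|)).
exact: sum_abs_le_prefix (iota_uniq _ _) HN.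
Qed.

Lemma sum_abs_le_fnorm (G : fam) s : c00 x -> (forall t, G t -> fset t) -> G s ->
  \sum_(k <- s) `|x k| <= fnorm G x.
Proof.
case=> N HN HG Hs; apply: ub_le_sup; last by exists s.
exists (\sum_(k < N) `|x k|) => _ [t [/HG Ht ->]].
exact: sum_abs_le_prefix (fset_uniq Ht) HN.
Qed.

End C0Norms.

Section TreeEvaluation.
Variables (R : realType) (theta : nat -> R) (F : nat -> fam) (x : nat -> R).
Local Open Scope ring_scope.
Hypothesis theta01 : forall k, (1 <= k)%N -> 0 < theta k < 1.

(* A leaf whose history lies in [r] is charged to its history class, any
   other leaf is charged to the l1 norm with weight [c]. *)
Lemma tree_eval_split T (r : seq (seq nat)) (c B : R) :
  c00 x -> tree_adm F T -> uniq r -> 0 <= c ->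
  (forall l, l \in leaves T [::] -> l.2 \notin r -> tagp theta l.2 <= c) ->
  (forall h, h \in r -> \sum_(l <- leaves T [::] | l.2 == h) c0norm_on l.1 x <= B) ->
  tree_eval theta T x <= (size r)%:R * B + c * l1norm x.
Proof.
move=> Hx HT Hu Hc Hleaf HB; set L := leaves T [::].
pose charge l := \sum_(h <- r) (if l.2 == h then c0norm_on l.1 x else 0).
have Hcharge l : charge l = if l.2 \in r then c0norm_on l.1 x else 0.
  rewrite /charge -big_mkcond big_const_seq /=.
  rewrite (eq_count (a2 := pred1 l.2)) => [|h]; last by rewrite /= eq_sym.
  by rewrite count_uniq_mem //; case: (_ \in _); rewrite /= ?addr0.
apply: le_trans (_ : \sum_(l <- L) (charge l + c * \sum_(k <- l.1) `|x k|) <= _).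
  rewrite /tree_eval big_seq [X in _ <= X]big_seq; apply: ler_sum => l Hl.
  have [_ _ Hpos] := leaves_adm HT Hl.
  have H0 := c0norm_on_ge0 x l.1; have HS := c0norm_on_le_sum x l.1.
  rewrite Hcharge; case: ifP => Hin.
    rewrite ler_wpDr ?mulr_ge0 ?sumr_ge0 // ler_piMl //; exact: tagp_le1.
  rewrite add0r (le_trans (ler_wpM2r H0 (Hleaf l Hl (negbT Hin)))) //.
  exact: ler_wpM2l.
rewrite big_split /= -mulr_sumr; apply: lerD; last first.
  rewrite ler_wpM2l // (_ : \sum_(l <- L) _ = \sum_(k <- flatten (map fst L)) `|x k|).
    exact: sum_abs_le_l1norm Hx (leaves_uniq HT).
  by rewrite big_flatten big_map.
rewrite exchange_big /=; apply: le_trans (_ : \sum_(h <- r) B <= _).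
  by rewrite big_seq [X in _ <= X]big_seq; apply: ler_sum => h /HB; rewrite -big_mkcond.
by rewrite big_const_seq count_predT iter_addr_0 mulr_natl.
Qed.

End TreeEvaluation.

(** * The estimate *)

Local Open Scope ring_scope.

Lemma four_pow_gt0 (R : realType) k : 0 < four_pow R k.
Proof. by rewrite /four_pow invr_gt0 exprn_gt0. Qed.

Lemma four_pow_le1 (R : realType) k : four_pow R k <= 1.
Proof. by rewrite /four_pow invf_le1 ?exprn_gt0 // exprn_ege1 // ler1n. Qed.

Lemma schreier_succ_fset S b s : schreier_sys S -> S (Osucc b) s -> fset s.
Proof.
case=> _ _ Hsucc _; rewrite (Hsucc (Osucc b) b) ?olt_succ //; first exact: comp_fset.
by split; apply: ole_refl.
Qed.

Section EtaOf.
Variables (R : realType) (theta : nat -> R) (alpha : nat -> ord) (eps : R) (p q : nat -> nat).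
Local Notation gam := (gamma theta alpha eps).
Local Notation eta := (eta_of theta alpha eps p q).

Lemma eta_ofS n : exists b, eta n = Osucc b.
Proof. by rewrite /eta_of; case: n => [|[|n]]; eexists. Qed.

Lemma gamma_p_lt_eta n o : ole o (gam (p n)) -> olt o (eta n).
Proof. by case: n => [|[|n]] Ho; apply: olt_s => //; apply: ole_trans Ho (oadd_infl _ _). Qed.

Lemma gamma_pq_lt_eta n o : (1 < n)%N ->
  ole o (oadd (gam (p n)) (gam (q n.-1))) -> olt o (eta n).
Proof. by case: n => [|[|n]] // _ Ho; apply: olt_s. Qed.

End EtaOf.

Section Construction.
Variables (R : realType) (theta : nat -> R) (F : nat -> fam) (eps : R) (Sch : ord -> fam)
  (beta : nat -> ord) (M : nat -> pred nat) (p q : nat -> nat).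
Local Notation alpha := (fun k => iota_CB (F k)).
Local Notation eta := (eta_of theta alpha eps p q).
Hypothesis Hcons : construction theta F eps Sch beta M p q.

Lemma p_ge1 n : (1 <= n)%N -> (1 <= p n)%N.
Proof. by case: Hcons => _ Hpq _ _ _ /Hpq []. Qed.

Lemma q_ge1 n : (1 <= n)%N -> (1 <= q n)%N.
Proof. by case: Hcons => _ Hpq _ _ _ /Hpq []. Qed.

Lemma theta_p_le n : (1 <= n)%N -> theta (p n) <= eps ^+ 2 * four_pow R n.
Proof.
case: Hcons => _ _ [Hp1 _ _] Hge2 _; case: n => [|[|n]] // _.
by case: (Hge2 n.+2).
Qed.

Lemma q_nondecr a b : (1 <= a)%N -> (a <= b)%N -> (q a <= q b)%N.
Proof.
case: Hcons => _ _ _ Hge2 _ Ha; elim: b => [|b IH]; first by rewrite leqn0 => /eqP Ha0; rewrite Ha0 in Ha.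
rewrite leq_eqVlt => /orP [/eqP <- //|Hab].
have [/= H1 _ _ H2 _] := Hge2 b.+1 (leq_ltn_trans Ha Hab).
exact: leq_trans (IH Hab) (ltnW (ltn_trans H1 H2)).
Qed.

Lemma inK_schreier n ns s : (1 <= n)%N ->
  inK theta alpha (four_pow R n) (p n) (eta n) ns -> inM (M n) s ->
  comp_list [seq F i | i <- ns] s -> Sch (eta n) s.
Proof. by move=> Hn HK; case: Hcons => _ _ _ _ /(_ n Hn) [_ /(_ ns HK s)]. Qed.

End Construction.

Section HistoryTags.
Variables (R : realType) (theta : nat -> R) (F : nat -> fam) (eps : R) (p q : nat -> nat).
Variable n : nat.
Local Notation alpha := (fun k => iota_CB (F k)).
Local Notation eta := (eta_of theta alpha eps p q).
Local Notation K := (inK theta alpha (four_pow R n) (p n) (eta n)).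
Hypothesis theta01 : forall k, (1 <= k)%N -> 0 < theta k < 1.
Hypothesis theta_noninc : forall k, (1 <= k)%N -> theta k.+1 <= theta k.
Hypothesis theta_null : forall e, 0 < e -> exists N, forall k, (N <= k)%N -> theta k < e.
Hypothesis alpha_ge1 : forall k, (1 <= k)%N -> ole oone (alpha k).
Hypothesis eps01 : 0 < eps < 1.
Hypothesis pn_ge1 : (1 <= p n)%N.

Let eps_gt0 : 0 < eps. Proof. by case/andP: eps01. Qed.
Let theta_pn_gt0 : 0 < theta (p n). Proof. exact: theta_gt0. Qed.

Lemma tagp_notK_cases ns : posl ns -> ~ K ns ->
  tagp theta ns <= four_pow R n * theta (p n) \/ ~ olt (ell (prodA alpha ns)) (eta n).
Proof. by move=> Hns HK; case: leP => [|Hlt]; [left | right=> Hell; apply: HK]. Qed.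

Lemma long_history_tagp ns : posl ns -> ~ olt (ell (prodA alpha ns)) (eta n) ->
  eps * tagp theta ns <= theta (p n).
Proof.
move=> Hns Hell; rewrite leNgt; apply/negP => Hlt; apply/Hell/gamma_p_lt_eta.
by have [Hg _] := gamma_spec theta01 theta_noninc theta_null alpha pn_ge1 eps_gt0; apply: Hg.
Qed.

Lemma long_history_tagp_suffix G r : (1 < n)%N -> (1 <= q n.-1)%N -> posl G -> posl r ->
  inN theta eps (q n.-1) G -> ~ olt (ell (prodA alpha (G ++ r))) (eta n) ->
  eps * tagp theta r <= theta (p n).
Proof.
move=> Hn Hq HG Hr HGN Hell; rewrite leNgt; apply/negP => Hlt; apply/Hell/gamma_pq_lt_eta => //.
have [Hgp _] := gamma_spec theta01 theta_noninc theta_null alpha pn_ge1 eps_gt0.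
have [Hgq _] := gamma_spec theta01 theta_noninc theta_null alpha Hq eps_gt0.
rewrite prodA_cat.
apply: ole_trans (ell_omul (oone_le_prodA alpha_ge1 Hr) (oone_le_prodA alpha_ge1 HG)) _.
by apply: oadd_mono; [apply: Hgp | apply: Hgq].
Qed.

Lemma tagp_notK_le ns : posl ns -> ~ K ns -> tagp theta ns <= theta (p n) / eps.
Proof.
have Hle : theta (p n) <= theta (p n) / eps.
  rewrite ler_pdivlMr // ler_piMr //; first exact: ltW.
  by case/andP: eps01 => _ /ltW.
move=> Hns /(tagp_notK_cases Hns) [Hsmall|/(long_history_tagp Hns)].
  apply: le_trans Hsmall (le_trans _ Hle).
  by rewrite ler_piMl ?four_pow_le1 //; apply/ltW/theta_pn_gt0.
by rewrite ler_pdivlMr // mulrC.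
Qed.

(* [G] is the history of the node of a (p_m, q_m)-restricted tree that the leaf lies in *)
Lemma tagp_notK_le_restricted m G r : (1 < n)%N -> (1 <= q n.-1)%N ->
  theta (q n.-1) <= theta (q m) -> theta (p m) <= eps ^+ 2 * four_pow R m ->
  posl G -> posl r -> inN theta eps (q m) G -> ~ inN theta eps (p m) G -> ~ K (G ++ r) ->
  tagp theta (G ++ r) <= theta (p n) * (four_pow R n + four_pow R m).
Proof.
move=> Hn Hq Hqq Hpm HG Hr [_ HGq] HGp.
have Hfn := four_pow_gt0 R n; have Hfm := four_pow_gt0 R m.
have HGr : posl (G ++ r) by rewrite /posl all_cat; apply/andP.
move=> /(tagp_notK_cases HGr) [Hsmall|Hell].
  by apply: le_trans Hsmall _; rewrite [X in X <= _]mulrC ler_wpM2l ?lerDl // ltW.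
have Htr := long_history_tagp_suffix Hn Hq HG Hr (conj HG (le_lt_trans Hqq HGq)) Hell.
have HtG : eps * tagp theta G <= theta (p m) by rewrite leNgt; apply/negP => ?; apply: HGp.
have HG0 := tagp_gt0 theta01 HG; have Hr0 := tagp_gt0 theta01 Hr.
suff : eps ^+ 2 * (tagp theta G * tagp theta r) <= eps ^+ 2 * (four_pow R m * theta (p n)).
  rewrite ler_pM2l ?exprn_gt0 // tagp_cat => H.
  by apply: le_trans H _; rewrite [X in X <= _]mulrC ler_wpM2l ?lerDr // ltW.
apply: le_trans (_ : theta (p m) * theta (p n) <= _).
  rewrite expr2 mulrACA; apply: ler_pM => //; rewrite mulr_ge0 // ltW //.
by rewrite mulrA ler_wpM2r // ltW.
Qed.

End HistoryTags.

Section TreeEstimate.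
Variables (R : realType) (theta : nat -> R) (F : nat -> fam) (eps : R) (Sch : ord -> fam)
  (beta : nat -> ord) (M : nat -> pred nat) (p q : nat -> nat) (n : nat) (x : nat -> R).
Local Notation alpha := (fun k => iota_CB (F k)).
Local Notation eta := (eta_of theta alpha eps p q).
Local Notation K := (inK theta alpha (four_pow R n) (p n) (eta n)).
Hypothesis theta01 : forall k, (1 <= k)%N -> 0 < theta k < 1.
Hypothesis theta_noninc : forall k, (1 <= k)%N -> theta k.+1 <= theta k.
Hypothesis theta_null : forall e, 0 < e -> exists N, forall k, (N <= k)%N -> theta k < e.
Hypothesis Freg : forall k, (1 <= k)%N -> regular (F k).
Hypothesis Hsch : schreier_sys Sch.
Hypothesis Hcons : construction theta F eps Sch beta M p q.
Hypothesis Hn : (1 <= n)%N.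
Hypothesis Hx : c00 x.
Hypothesis HxM : forall k, x k != 0 -> M n k.
Hypothesis Hfnorm :
  fnorm (Sch (eta n)) x <= four_pow R n * ((card_of K)%:R + 1)^-1.

Lemma sum_history_le_fnorm T h : tree_adm F T -> K h ->
  \sum_(l <- leaves T [::] | l.2 == h) c0norm_on l.1 x <= fnorm (Sch (eta n)) x.
Proof.
move=> HT Hh; rewrite sum_c0norm_on_argmax.
have [b Hb] := eta_ofS theta alpha eps p q n.
apply: sum_abs_le_fnorm Hx _ _ => [t|]; first by rewrite Hb; apply: schreier_succ_fset.
have Hpk E : c0norm_on E x != 0 -> argmax_abs x E \in E by case/argmax_absP.
apply: (inK_schreier Hcons Hn Hh) (picks_comp_list Hpk Freg h HT).
apply/allP => k /mapP [l]; rewrite mem_filter => /andP [/andP [_ Hl] _] ->.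
by apply: HxM; rewrite -normr_eq0 (argmax_absP Hl).2.
Qed.

Lemma tree_eval_le_notK T c : tree_adm F T -> 0 <= c ->
  (forall l, l \in leaves T [::] -> ~ K l.2 -> tagp theta l.2 <= c) ->
  tree_eval theta T x <= four_pow R n + c * l1norm x.
Proof.
move=> HT Hc Hleaf; have Hf := four_pow_gt0 R n.
have c0 : 0 < four_pow R n * theta (p n).
  by rewrite mulr_gt0 // theta_gt0 // (p_ge1 Hcons).
have HKtag ns : K ns -> posl ns /\ four_pow R n * theta (p n) < tagp theta ns by case.
have [r [Hu HKr Hsz]] := card_ofP theta01 theta_noninc theta_null c0 HKtag.
apply: le_trans (tree_eval_split theta01 (B := fnorm (Sch (eta n)) x) Hx HT Hu Hc _ _) _.
- by move=> l Hl Hnr; apply: Hleaf => // /HKr; apply/negP.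
- by move=> h /HKr; apply: sum_history_le_fnorm.
rewrite lerD2r; apply: le_trans (ler_wpM2l (ler0n _ _) Hfnorm) _.
by rewrite -Hsz mulrCA ler_piMr ?(ltW Hf) // natr1 ler_pdivrMr ?ltr0Sn // mul1r ler_nat.
Qed.

End TreeEstimate.

Theorem lemma6 (R : realType) (theta : nat -> R) (F : nat -> fam) (xi : ord)
    (eps : R) (Sch : ord -> fam) (beta : nat -> ord) (M : nat -> pred nat)
    (p q : nat -> nat) (n : nat) (x : nat -> R) :
  (* (theta_n) nonincreasing null in (0,1) *)
  (forall k, (1 <= k)%N -> 0 < theta k < 1) ->
  (forall k, (1 <= k)%N -> theta k.+1 <= theta k) ->
  (forall e, 0 < e -> exists N, forall k, (N <= k)%N -> theta k < e) ->
  (* regular families, alpha_n = iota(F_n) > 1, alpha = sup alpha_n = omega^(omega^xi),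
     alpha <> alpha_n, 0 < xi < omega_1 *)
  (forall k, (1 <= k)%N -> regular (F k)) ->
  (forall k, (1 <= k)%N -> olt oone (iota_CB (F k))) ->
  olt Ozero xi ->
  oeq (Olim (fun k => iota_CB (F k.+1))) (oexp (oexp xi)) ->
  (forall k, (1 <= k)%N -> ~ oeq (oexp (oexp xi)) (iota_CB (F k))) ->
  (* Schreier families, for a fixed choice of approximating sequences *)
  schreier_sys Sch ->
  (* (dagger) for the fixed eps in (0,1) *)
  0 < eps < 1 ->
  (forall b, olt b (oexp xi) -> exists m, (1 <= m)%N /\
     olt (oadd (oadd (gamma theta (fun k => iota_CB (F k)) eps m) otwo) b)
         (ell (iota_CB (F m)))) ->
  (* (beta_n) is the sequence increasing to omega^xi defining S_{omega^xi} *)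
  (forall k, (1 <= k)%N -> olt (beta k) (beta k.+1)) ->
  oeq (Olim (fun k => beta k.+1)) (oexp xi) ->
  (forall s, Sch (oexp xi) s <->
     (s = [::] \/ exists k, (1 <= k)%N /\ (k <= head 0%N s)%N /\ Sch (beta k) s)) ->
  (* the construction of p_n, eta_n, q_n, M_n *)
  construction theta F eps Sch beta M p q ->
  (* the vector x *)
  (1 <= n)%N ->
  c00 x ->
  (forall k, x k != 0 -> M n k) ->
  fnorm (Sch (eta_of theta (fun k => iota_CB (F k)) eps p q n)) x <=
    four_pow R n *
    ((card_of (inK theta (fun k => iota_CB (F k)) (four_pow R n) (p n)
                   (eta_of theta (fun k => iota_CB (F k)) eps p q n)))%:R + 1)^-1 ->
  (* m = 0: arbitrary admissible trees *)
  (forall T, tree_adm F T ->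
     tree_eval theta T x <= four_pow R n + theta (p n) / eps * l1norm x) /\
  (* 0 < m < n: (p_m,q_m)-restricted admissible trees *)
  (forall m T, (0 < m)%N -> (m < n)%N -> tree_adm F T ->
     restricted theta eps (p m) (q m) T ->
     tree_eval theta T x <=
       four_pow R n + theta (p n) * l1norm x * (four_pow R n + four_pow R m)).
Proof.
move=> theta01 theta_noninc theta_null Freg alpha_gt1 _ _ _ Hsch eps01 _ _ _ _ Hcons Hn Hx HxM Hfn.
have alpha_ge1 k : (1 <= k)%N -> ole oone (iota_CB (F k)) by move/alpha_gt1/olt_ole.
have eps_gt0 : 0 < eps by case/andP: eps01.
have Hpn := p_ge1 Hcons Hn; have theta_pn : 0 <= theta (p n) by apply/ltW/theta_gt0.
have Hest := tree_eval_le_notK theta01 theta_noninc theta_null Freg Hsch Hcons Hn Hx HxM Hfn.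
split=> [T HT|m T Hm Hmn HT Hres].
  apply: (Hest _ _ HT); first by rewrite divr_ge0 // ltW.
  move=> l /(leaves_adm HT) [_ _ Hpos].
  exact: (tagp_notK_le theta01 theta_noninc theta_null eps01 Hpn Hpos).
have Hn2 : (1 < n)%N := leq_ltn_trans Hm Hmn.
have Hmn1 : (m <= n.-1)%N by rewrite -ltnS prednK // ltnW.
have Hqm := q_ge1 Hcons Hm; have Hqn := q_ge1 Hcons (leq_trans Hm Hmn1).
have Hqq : theta (q n.-1) <= theta (q m) by apply: theta_anti (q_nondecr Hcons Hm Hmn1).
rewrite mulrAC; apply: (Hest _ _ HT); first by rewrite mulr_ge0 // addr_ge0 // ltW ?four_pow_gt0.
move=> l Hl; have [j [_ [HGq HGp]]] := Hres l Hl.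
have [_ _] := leaves_adm HT Hl; rewrite -(cat_take_drop j l.2) {1}/posl all_cat => /andP [HG Hr].
exact: (tagp_notK_le_restricted theta01 theta_noninc theta_null alpha_ge1 eps01 Hpn
  Hn2 Hqn Hqq (theta_p_le Hcons Hm) HG Hr HGq HGp).
Qed.
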